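(* Let $D\subset\mathbb{R}^2$ be a bounded, simply connected open set with $C^\infty$ boundary $\Gamma=\partial D$ of length $L$, and let $\gamma\in C^\infty([0,L],\mathbb{R}^2)$ be an arc-length parametrization of $\Gamma$. Let $\alpha>0$, $k>0$ and $\lambda$ be constants, and let $u$ be the scattered field of the impenetrable scattering problem described in the context (with sound-soft, sound-hard or impedance boundary condition). Then for every integer $N\ge 0$ the $N$th order normal derivative $\partial_{\mathbf{n}}^N u$ on $\Gamma$ is a linear combination of the functions $\partial_{\boldsymbol{\tau}}^j u$ and $\partial_{\boldsymbol{\tau}}^j\partial_{\mathbf{n}}u$ on $\Gamma$, $0\le j\le N$; that is, there are functions $a^N_j, b^N_j$ on $\Gamma$, not depending on $u$, such that $$\partial_{\mathbf{n}}^N u=\sum_{j=0}^N a^N_j\,\partial_{\boldsymbol{\tau}}^j u+\sum_{j=0}^{N} b^N_j\,\partial_{\boldsymbol{\tau}}^j\partial_{\mathbf{n}}u\quad\text{on }\Gamma.$$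
   Context: Setting: $D_{\rm ex}=\mathbb{R}^2\setminus\overline{D}$. An incident field $\phi$ (a plane wave $e^{ik\mathbf{x}\cdot\mathbf{z}}$ with $|\mathbf{z}|=1$, or a point source $\frac{i}{4}H_0^{(1)}(k|\mathbf{x}-\mathbf{x}_s|)$ with $\mathbf{x}_s$ away from $\Gamma$) illuminates $D$. The total field $u_{\rm tot}=\phi+u$ satisfies $\nabla\cdot\alpha\nabla u_{\rm tot}+k^2u_{\rm tot}=0$ in $D_{\rm ex}$ (away from the source) with one of the boundary conditions $u_{\rm tot}=0$, $\mathbf{n}\cdot\alpha\nabla u_{\rm tot}=0$, or $\mathbf{n}\cdot\alpha\nabla u_{\rm tot}+i\lambda u_{\rm tot}=0$ on $\Gamma$; the scattered field $u$ solves the homogeneous Helmholtz equation $\nabla\cdot\alpha\nabla u+k^2u=0$ in $D_{\rm ex}$, is smooth up to $\Gamma$ from $D_{\rm ex}$, and satisfies the Sommerfeld radiation condition $\lim_{r\to\infty}\sqrt r(\partial_r u-iku)=0$. Here $\mathbf{n}$ is the unit outward normal, $\boldsymbol{\tau}=\dot\gamma$ the unit tangent; $\partial_{\boldsymbol{\tau}}^j$ denotes the $j$th derivative with respect to arc length $s$ along $\Gamma$. Writing points near $\Gamma$ in $D_{\rm ex}$ as $\mathbf{y}=\gamma(s)+\eta\,\mathbf{n}(s)$ with $\eta>0$ small, $\partial_{\mathbf{n}}^N u$ on $\Gamma$ means $\lim_{\eta\to0^+}\partial_\eta^N u$, and $\partial_{\boldsymbol{\tau}}^j\partial_{\mathbf{n}}u$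 means $\lim_{\eta\to 0^+}\partial_s^j\partial_\eta u$. *)

From Stdlib Require Import Reals Lra List ClassicalEpsilon Factorial.
From Coquelicot Require Import Coquelicot.
Open Scope R_scope.

Definition pt := (R * R)%type.
Definition nrm (p : pt) : R := sqrt (fst p ^ 2 + snd p ^ 2).
Definition dist2 (p q : pt) : R := nrm (fst p - fst q, snd p - snd q).
Definition dot (p q : pt) : R := fst p * fst q + snd p * snd q.
Definition pmove (p : pt) (e : R) (v : pt) : pt :=
  (fst p + e * fst v, snd p + e * snd v).

Definition open2 (D : pt -> Prop) : Prop :=
  forall p, D p -> exists eps, 0 < eps /\ forall q, dist2 p q < eps -> D q.
Definition bounded2 (D : pt -> Prop) : Prop :=
  exists M, forall p, D p -> nrm p <= M.
Definition closure2 (D : pt -> Prop) (p : pt) : Prop :=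
  forall eps, 0 < eps -> exists q, D q /\ dist2 p q < eps.
(* topological boundary (closure2 minus interior; D is open here) *)
Definition bdry (D : pt -> Prop) (p : pt) : Prop := closure2 D p /\ ~ D p.
Definition Dex (D : pt -> Prop) (p : pt) : Prop := ~ closure2 D p.

Definition in01 (t : R) : Prop := 0 <= t <= 1.

(* path-connectedness; paths are continuous maps [0,1] -> D (given as
   continuous maps on R, which is no restriction: extend by constants) *)
Definition path_connected2 (D : pt -> Prop) : Prop :=
  forall p q, D p -> D q ->
    exists f : R -> pt, (forall t, continuous f t) /\ f 0 = p /\ f 1 = q /\
      (forall t, in01 t -> D (f t)).

(* simply connected: nonempty, path connected, and every loop in D is
   null-homotopic in D through loops (a homotopy on [0,1]^2, given as a
   continuous map on R^2, which is no restriction: compose with clamping) *)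
Definition simply_connected2 (D : pt -> Prop) : Prop :=
  (exists p, D p) /\ path_connected2 D /\
  forall f : R -> pt,
    (forall t, continuous f t) -> f 0 = f 1 -> (forall t, in01 t -> D (f t)) ->
    exists H : pt -> pt,
      (forall q, continuous H q) /\
      (forall s t, in01 s -> in01 t -> D (H (s, t))) /\
      (forall t, in01 t -> H (0, t) = f t) /\
      (forall t, in01 t -> H (1, t) = H (1, 0)) /\
      (forall s, in01 s -> H (s, 0) = H (s, 1)).

Definition arclength_param (D : pt -> Prop) (L : R) (gam : R -> pt) : Prop :=
  0 < L /\
  (forall m t, ex_derive_n (fun s => fst (gam s)) m t) /\
  (forall m t, ex_derive_n (fun s => snd (gam s)) m t) /\
  (forall t, gam (t + L) = gam t) /\
  (forall t, (Derive (fun s => fst (gam s)) t) ^ 2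
             + (Derive (fun s => snd (gam s)) t) ^ 2 = 1) /\
  (forall s t, 0 <= s < L -> 0 <= t < L -> gam s = gam t -> s = t) /\
  (forall p, bdry D p <-> exists s, 0 <= s < L /\ p = gam s).

Definition tangent (gam : R -> pt) (s : R) : pt :=
  (Derive (fun t => fst (gam t)) s, Derive (fun t => snd (gam t)) s).

Definition outward_normal (D : pt -> Prop) (gam : R -> pt) (nv : R -> pt) : Prop :=
  forall s,
    nrm (nv s) = 1 /\ dot (nv s) (tangent gam s) = 0 /\
    exists del, 0 < del /\
      forall e, 0 < e < del -> Dex D (pmove (gam s) e (nv s)).

Definition Cderive_n (g : R -> C) (m : nat) (t : R) : C :=
  (Derive_n (fun x => fst (g x)) m t, Derive_n (fun x => snd (g x)) m t).

(* right limit at 0 of g : R -> C (0 if it does not exist) *)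
Definition rlim0 (g : R -> C) : C :=
  match excluded_middle_informative
          (exists l : C, filterlim g (at_right 0) (locally l)) with
  | left H => proj1_sig (constructive_indefinite_description _ H)
  | right _ => RtoC 0
  end.

Definition pd (b : bool) (f : pt -> R) (p : pt) : R :=
  if b then Derive (fun t => f (t, snd p)) (fst p)
  else Derive (fun t => f (fst p, t)) (snd p).
Fixpoint ipd (w : list bool) (f : pt -> R) : pt -> R :=
  match w with nil => f | b :: w' => pd b (ipd w' f) end.

Definition smooth_on (O : pt -> Prop) (f : pt -> R) : Prop :=
  forall w p, O p ->
    continuous (ipd w f) p /\
    ex_derive (fun t => ipd w f (t, snd p)) (fst p) /\
    ex_derive (fun t => ipd w f (fst p, t)) (snd p).

Definition Csmooth_on (O : pt -> Prop) (u : pt -> C) : Prop :=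
  smooth_on O (fun p => fst (u p)) /\ smooth_on O (fun p => snd (u p)).

Definition lap (f : pt -> R) (p : pt) : R :=
  pd true (pd true f) p + pd false (pd false f) p.

Definition helmholtz_at (alpha k : R) (u : pt -> C) (p : pt) : Prop :=
  alpha * lap (fun q => fst (u q)) p + k ^ 2 * fst (u p) = 0 /\
  alpha * lap (fun q => snd (u q)) p + k ^ 2 * snd (u p) = 0.

Definition dr (u : pt -> C) (x : pt) : C :=
  Cderive_n (fun t => u (t * fst x / nrm x, t * snd x / nrm x)) 1 (nrm x).

Definition sommerfeld (k : R) (u : pt -> C) : Prop :=
  forall eps, 0 < eps -> exists R0, forall x, R0 < nrm x ->
    sqrt (nrm x) * Cmod (Cminus (dr u x) (Cmult (0, k) (u x))) < eps.

Fixpoint harmonic (m : nat) : R :=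
  match m with O => 0 | S m' => harmonic m' + / INR (S m') end.

Definition euler_gamma : R := real (Lim_seq (fun n => harmonic n - ln (INR n))).

Definition besselJ0 (x : R) : R :=
  Series (fun m => (-1) ^ m * (x / 2) ^ (2 * m) / (INR (fact m)) ^ 2).
Definition besselY0 (x : R) : R :=
  2 / PI * ((ln (x / 2) + euler_gamma) * besselJ0 x)
  + 2 / PI * Series (fun m => (-1) ^ (m + 1) * harmonic m
                               * (x / 2) ^ (2 * m) / (INR (fact m)) ^ 2).
Definition hankel0 (x : R) : C := (besselJ0 x, besselY0 x).

Inductive incident := PlaneWave (z : pt) | PointSource (xs : pt).

Definition inc_field (k : R) (phi : incident) (x : pt) : C :=
  match phi with
  | PlaneWave z => (cos (k * dot x z), sin (k * dot x z))
  | PointSource xs => Cmult (0, / 4) (hankel0 (k * dist2 x xs))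
  end.

Definition inc_admissible (D : pt -> Prop) (phi : incident) : Prop :=
  match phi with
  | PlaneWave z => nrm z = 1
  | PointSource xs => ~ bdry D xs
  end.

Definition away_from_source (phi : incident) (x : pt) : Prop :=
  match phi with PlaneWave _ => True | PointSource xs => x <> xs end.

Definition Ufun (gam nv : R -> pt) (f : pt -> C) (s e : R) : C :=
  f (pmove (gam s) e (nv s)).

Definition dnN (gam nv : R -> pt) (f : pt -> C) (N : nat) (s : R) : C :=
  rlim0 (fun e => Cderive_n (Ufun gam nv f s) N e).

Definition dtau (gam : R -> pt) (f : pt -> C) (j : nat) (s : R) : C :=
  Cderive_n (fun t => f (gam t)) j s.

Definition dtau_dn (gam nv : R -> pt) (f : pt -> C) (j : nat) (s : R) : C :=
  rlim0 (fun e => Cderive_n (fun t => Cderive_n (Ufun gam nv f t) 1 e) j s).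

Inductive bc_kind := SoundSoft | SoundHard | Impedance.

Definition bc_holds (bc : bc_kind) (alpha lam L : R) (gam nv : R -> pt)
    (utot : pt -> C) : Prop :=
  forall s, 0 <= s <= L ->
  match bc with
  | SoundSoft => utot (gam s) = RtoC 0
  | SoundHard => Cmult (RtoC alpha) (dnN gam nv utot 1 s) = RtoC 0
  | Impedance => Cplus (Cmult (RtoC alpha) (dnN gam nv utot 1 s))
                       (Cmult (0, lam) (utot (gam s))) = RtoC 0
  end.

Definition scattered_field (D : pt -> Prop) (L : R) (gam nv : R -> pt)
    (alpha k lam : R) (bc : bc_kind) (phi : incident) (u : pt -> C) : Prop :=
  inc_admissible D phi /\
  (* smooth up to Gamma from D_ex: smooth on an open neighbourhood of the
     closure2 of D_ex *)
  (exists O, open2 O /\ (forall p, closure2 (Dex D) p -> O p) /\ Csmooth_on O u) /\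
  (forall p, Dex D p -> helmholtz_at alpha k u p) /\
  (forall p, Dex D p -> away_from_source phi p ->
     helmholtz_at alpha k (fun q => Cplus (inc_field k phi q) (u q)) p) /\
  bc_holds bc alpha lam L gam nv (fun q => Cplus (inc_field k phi q) (u q)) /\
  sommerfeld k u.

(* In the normal coordinates (s, y) |-> gamma(s) + y n(s) the Helmholtz equation,
   multiplied by h^3 where h = 1 - curvature * y is the Lame coefficient, becomes a
   second-order equation whose coefficients are polynomials in y.  Differentiating it
   m times in y and letting y -> 0+ (the field is smooth up to the boundary) expresses
   the (m+2)-th normal derivative on the boundary through lower normal derivatives and
   their tangential derivatives, with smooth coefficients built from the curvature,
   alpha and k only.  By induction every normal derivative is a combination of
   tangential derivatives of the Dirichlet and Neumann traces.

   The outward normal is only given pointwise, so one first shows that near each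
   boundary point it is a fixed rotation of the tangent and that short normal segments
   stay in the exterior: locally the curve is a graph over its tangent line, it stays
   away from the point outside a parameter neighbourhood (injectivity on a period), and
   the two sides of the curve cannot be joined by a path avoiding it. *)

From Stdlib Require Import Reals Lra Lia List ClassicalEpsilon Classical ZArith.
From Coquelicot Require Import Coquelicot.
Open Scope R_scope.

Lemma is_derive_Rplus (f g : R -> R) (x a b : R) :
  is_derive f x a -> is_derive g x b -> is_derive (fun t => f t + g t) x (a + b).
Proof. apply (is_derive_plus f g). Qed.

Lemma is_derive_Rmult (f g : R -> R) (x a b : R) :
  is_derive f x a -> is_derive g x b ->
  is_derive (fun t => f t * g t) x (a * g x + f x * b).
Proof. apply Derive.is_derive_mult. Qed.

Lemma is_derive_Rconst (a x : R) : is_derive (fun _ : R => a) x 0.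
Proof. apply (is_derive_const (K := R_AbsRing) (V := R_NormedModule)). Qed.

Lemma is_derive_Rid (x : R) : is_derive (fun t : R => t) x 1.
Proof. apply (is_derive_id (K := R_AbsRing)). Qed.

Lemma is_derive_eq_val (f : R -> R) (x a b : R) : is_derive f x a -> a = b -> is_derive f x b.
Proof. now intros H <-. Qed.

Lemma locally_R (P : R -> Prop) (x d : R) :
  0 < d -> (forall y, Rabs (y - x) < d -> P y) -> locally x P.
Proof. intros Hd H. exists (mkposreal d Hd). exact H. Qed.

Lemma continuous_R_eps (h : R -> R) (x : R) : continuous h x ->
  forall eps, 0 < eps -> exists d, 0 < d /\ forall y, Rabs (y - x) < d -> Rabs (h y - h x) < eps.
Proof.
  intros Hc eps He.
  destruct (Hc (ball (h x) eps)) as [d Hd].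
  { exists (mkposreal eps He). now intros y Hy. }
  exists d. split; [apply cond_pos | exact Hd].
Qed.

Definition smooth (c : R -> R) : Prop := forall n x, ex_derive (Derive_n c n) x.

Lemma smooth_ex_derive_n (c : R -> R) : smooth c -> forall k x, ex_derive_n c k x.
Proof. intros H [|k] x; simpl; auto. Qed.

Lemma smooth_ex_derive (c : R -> R) (x : R) : smooth c -> ex_derive c x.
Proof. intros H. exact (H 0%nat x). Qed.

Lemma smooth_continuous (c : R -> R) (x : R) : smooth c -> continuous c x.
Proof.
  intros H. apply (ex_derive_continuous (K := R_AbsRing) (V := R_NormedModule)).
  now apply smooth_ex_derive.
Qed.

Lemma smooth_ext (c d : R -> R) : (forall t, c t = d t) -> smooth c -> smooth d.
Proof.
  intros E Hc n x. apply ex_derive_ext with (Derive_n c n).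
  - intros; now apply Derive_n_ext.
  - apply Hc.
Qed.

Lemma smooth_const (a : R) : smooth (fun _ => a).
Proof.
  intros [|n] x.
  - apply ex_derive_const.
  - apply ex_derive_ext with (fun _ => 0).
    + intros t. symmetry. apply Derive_n_const.
    + apply ex_derive_const.
Qed.

Lemma Derive_n_Derive (c : R -> R) (n : nat) (x : R) :
  Derive_n (Derive c) n x = Derive_n c (S n) x.
Proof.
  replace (S n) with (n + 1)%nat by lia.
  rewrite <- Derive_n_comp. now apply Derive_n_ext.
Qed.

Lemma smooth_Derive (c : R -> R) : smooth c -> smooth (Derive c).
Proof.
  intros Hc n x. apply ex_derive_ext with (Derive_n c (S n)).
  - intros t. symmetry. apply Derive_n_Derive.
  - apply Hc.
Qed.

Lemma Derive_n_plus_smooth (c d : R -> R) (n : nat) (x : R) : smooth c -> smooth d ->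
  Derive_n (fun t => c t + d t) n x = Derive_n c n x + Derive_n d n x.
Proof.
  intros Hc Hd. apply Derive_n_plus;
    exists (mkposreal 1 Rlt_0_1); intros; now apply smooth_ex_derive_n.
Qed.

Lemma smooth_plus (c d : R -> R) : smooth c -> smooth d -> smooth (fun t => c t + d t).
Proof.
  intros Hc Hd n x.
  apply ex_derive_ext with (fun t => Derive_n c n t + Derive_n d n t).
  - intros t. symmetry. now apply Derive_n_plus_smooth.
  - apply (ex_derive_plus (Derive_n c n) (Derive_n d n)); auto.
Qed.

Lemma smooth_mult_upto (n : nat) (c d : R -> R) : smooth c -> smooth d ->
  forall k x, (k <= n)%nat -> ex_derive (Derive_n (fun t => c t * d t) k) x.
Proof.
  revert c d. induction n as [|n IH]; intros c d Hc Hd k x Hk.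
  - replace k with 0%nat by lia. apply ex_derive_mult; now apply smooth_ex_derive.
  - destruct (Nat.eq_dec k (S n)) as [->|Hne]; [|apply IH; auto; lia].
    assert (Hc' := smooth_Derive c Hc). assert (Hd' := smooth_Derive d Hd).
    apply ex_derive_ext with (fun y => Derive_n (fun t => Derive c t * d t) n y
                                      + Derive_n (fun t => c t * Derive d t) n y).
    { intros y. symmetry. rewrite <- Derive_n_Derive.
      rewrite (Derive_n_ext _ (fun t => Derive c t * d t + c t * Derive d t)).
      2: { intros t. apply Derive_mult; now apply smooth_ex_derive. }
      apply Derive_n_plus.
      - exists (mkposreal 1 Rlt_0_1). intros z _ [|j] Hj; simpl; auto.
        apply IH; auto; lia.
      - exists (mkposreal 1 Rlt_0_1). intros z _ [|j] Hj; simpl; auto.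
        apply IH; auto; lia. }
    apply (ex_derive_plus (Derive_n (fun t => Derive c t * d t) n)
                          (Derive_n (fun t => c t * Derive d t) n)); apply IH; auto.
Qed.

Lemma smooth_mult (c d : R -> R) : smooth c -> smooth d -> smooth (fun t => c t * d t).
Proof. intros Hc Hd n x. now apply (smooth_mult_upto n). Qed.

Lemma smooth_opp (c : R -> R) : smooth c -> smooth (fun t => - c t).
Proof.
  intros Hc. apply smooth_ext with (fun t => (-1) * c t); [intros; ring|].
  apply smooth_mult; auto. apply smooth_const.
Qed.

Lemma smooth_minus (c d : R -> R) : smooth c -> smooth d -> smooth (fun t => c t - d t).
Proof.
  intros Hc Hd. apply smooth_ext with (fun t => c t + - d t); [intros; ring|].
  apply smooth_plus; auto. now apply smooth_opp.
Qed.

Lemma smooth_pow (c : R -> R) (n : nat) : smooth c -> smooth (fun z => c z ^ n).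
Proof.
  intros Hc. induction n as [|n IH].
  - apply smooth_ext with (fun _ => 1); [reflexivity|]. apply smooth_const.
  - apply smooth_ext with (fun z => c z * c z ^ n); [reflexivity|]. now apply smooth_mult.
Qed.

Lemma smooth_MVT (h : R -> R) (a b : R) : smooth h ->
  exists c, Rmin a b <= c <= Rmax a b /\ h b - h a = Derive h c * (b - a).
Proof.
  intros Hh. apply MVT_gen.
  - intros x _. apply Derive_correct. now apply smooth_ex_derive.
  - intros x _. apply continuity_pt_filterlim. now apply smooth_continuous.
Qed.

Lemma is_derive_constant_fun (F : R -> R) (t l : R) :
  (forall x, F x = F 0) -> is_derive F t l -> l = 0.
Proof.
  intros E H. apply is_derive_unique in H. rewrite <- H.
  rewrite (Derive_ext F (fun _ => F 0) t E). apply Derive_const.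
Qed.

Lemma sum_n_zero_R (N : nat) : sum_n (fun _ : nat => 0) N = 0.
Proof. induction N as [|N IH]; [now rewrite sum_O | rewrite sum_Sn, IH; apply Rplus_0_r]. Qed.

Lemma sum_n_Rplus (u v : nat -> R) (N : nat) :
  sum_n (fun j => u j + v j) N = sum_n u N + sum_n v N.
Proof. apply (sum_n_plus u v N). Qed.

Lemma sum_n_Kronecker (X : nat -> R) (j0 N : nat) : (j0 <= N)%nat ->
  sum_n (fun j => if Nat.eqb j0 j then X j else 0) N = X j0.
Proof.
  induction N as [|N IH]; intros H.
  - rewrite sum_O. replace j0 with 0%nat by lia. reflexivity.
  - rewrite sum_Sn. destruct (Nat.eq_dec j0 (S N)) as [->|NE].
    + rewrite (sum_n_ext_loc _ (fun _ => 0)), sum_n_zero_R, Nat.eqb_refl.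
      * apply Rplus_0_l.
      * intros n Hn. destruct (Nat.eqb_spec (S N) n); [lia | reflexivity].
    + rewrite IH by lia. destruct (Nat.eqb_spec j0 (S N)); [lia|]. apply Rplus_0_r.
Qed.

(** * Calculus in the plane *)

Lemma dist2_lt (p q : pt) (e : R) :
  Rabs (fst q - fst p) < e / 2 -> Rabs (snd q - snd p) < e / 2 -> dist2 p q < e.
Proof.
  intros H1 H2. unfold dist2, nrm; cbn [fst snd].
  rewrite Rabs_minus_sym in H1, H2.
  assert (He : 0 < e) by (pose proof (Rabs_pos (fst p - fst q)); lra).
  rewrite <- (sqrt_pow2 e) by lra. apply sqrt_lt_1_alt. split.
  { apply Rplus_le_le_0_compat; apply pow2_ge_0. }
  rewrite <- (pow2_abs (fst p - fst q)), <- (pow2_abs (snd p - snd q)).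
  set (a := Rabs (fst p - fst q)) in *. set (b := Rabs (snd p - snd q)) in *.
  assert (0 <= a) by apply Rabs_pos. assert (0 <= b) by apply Rabs_pos.
  clearbody a b. nra.
Qed.

Lemma Rabs_fst_le_dist2 (p q : pt) : Rabs (fst p - fst q) <= dist2 p q.
Proof.
  unfold dist2, nrm; cbn [fst snd]. rewrite <- sqrt_Rsqr_abs. apply sqrt_le_1_alt.
  rewrite Rsqr_pow2. pose proof (pow2_ge_0 (snd p - snd q)). lra.
Qed.

Lemma Rabs_snd_le_dist2 (p q : pt) : Rabs (snd p - snd q) <= dist2 p q.
Proof.
  unfold dist2, nrm; cbn [fst snd]. rewrite <- sqrt_Rsqr_abs. apply sqrt_le_1_alt.
  rewrite Rsqr_pow2. pose proof (pow2_ge_0 (fst p - fst q)). lra.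
Qed.

Lemma open2_open (O : pt -> Prop) : open2 O -> open O.
Proof.
  intros HO p Hp. destruct (HO p Hp) as [e [He H]].
  assert (He2 : 0 < e / 2) by lra.
  exists (mkposreal _ He2). intros q [H1 H2]. now apply H, dist2_lt.
Qed.

Lemma differentiable_of_partials (G : pt -> R) (p : pt) :
  locally p (fun q => ex_derive (fun t => G (t, snd q)) (fst q)) ->
  ex_derive (fun t => G (fst p, t)) (snd p) ->
  continuous (pd true G) p ->
  differentiable_pt_lim (fun x y => G (x, y)) (fst p) (snd p) (pd true G p) (pd false G p).
Proof.
  destruct p as [x y]; cbn [fst snd]. intros Hx Hy Hc.
  apply filterdiff_differentiable_pt_lim.
  eapply filterdiff_ext_lin.
  - apply (is_derive_filterdiff (fun a b => G (a, b)) x y (fun a b => pd true G (a, b))).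
    + apply filter_imp with (2 := Hx). intros [a b] H. now apply Derive_correct.
    + now apply Derive_correct.
    + eapply continuous_ext; [|exact Hc]. now intros [a b].
  - intros [a b]. reflexivity.
Qed.

Lemma smooth_on_differentiable (O : pt -> Prop) (f : pt -> R) (w : list bool) (q : pt) :
  open O -> smooth_on O f -> O q ->
  differentiable_pt_lim (fun x y => ipd w f (x, y)) (fst q) (snd q)
    (ipd (true :: w) f q) (ipd (false :: w) f q).
Proof.
  intros HO Hf Hq. apply differentiable_of_partials.
  - apply filter_imp with (2 := HO q Hq). intros q' Hq'. apply (Hf w q' Hq').
  - apply (Hf w q Hq).
  - apply (Hf (true :: w) q Hq).
Qed.

Lemma is_derive_comp_2d (G : pt -> R) (q : pt) (P1 P2 : R -> R) (x l1 l2 d1 d2 : R) :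
  differentiable_pt_lim (fun a b => G (a, b)) (fst q) (snd q) l1 l2 ->
  is_derive P1 x d1 -> is_derive P2 x d2 -> P1 x = fst q -> P2 x = snd q ->
  is_derive (fun t => G (P1 t, P2 t)) x (l1 * d1 + l2 * d2).
Proof.
  intros HG H1 H2 E1 E2. apply is_derive_Reals.
  apply (derivable_pt_lim_comp_2d (fun a b => G (a, b))); try now apply is_derive_Reals.
  now rewrite E1, E2.
Qed.

Lemma filterlim_locally_pair {T : Type} {U V : UniformSpace} (F : (T -> Prop) -> Prop)
  (f : T -> U) (g : T -> V) (a : U) (b : V) : Filter F ->
  filterlim f F (locally a) -> filterlim g F (locally b) ->
  filterlim (fun t => (f t, g t)) F (locally (a, b)).
Proof.
  intros HF Hf Hg P [eps HP]. unfold filtermap.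
  apply filter_imp with (fun t => ball a eps (f t) /\ ball b eps (g t)).
  - intros t [H1 H2]. now apply HP.
  - apply filter_and; [apply Hf | apply Hg]; apply locally_ball.
Qed.

Lemma locally_fst (P : pt -> Prop) (p : pt) :
  locally p P -> locally (fst p) (fun t => P (t, snd p)).
Proof. intros [d Hd]. exists d. intros t Ht. apply Hd. split; [exact Ht | apply ball_center]. Qed.

Lemma locally_snd (P : pt -> Prop) (p : pt) :
  locally p P -> locally (snd p) (fun t => P (fst p, t)).
Proof. intros [d Hd]. exists d. intros t Ht. apply Hd. split; [apply ball_center | exact Ht]. Qed.

(* In a word [w] of [ipd w], [true] differentiates in the first variable and [false]
   in the second; in normal coordinates these are the arc length and the normal
   distance. *)
Lemma ipd_app (w1 w2 : list bool) (G : pt -> R) : ipd (w1 ++ w2) G = ipd w1 (ipd w2 G).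
Proof. induction w1 as [|b w1 IH]; simpl; [reflexivity | now rewrite IH]. Qed.

Lemma smooth_on_ipd (W : pt -> Prop) (G : pt -> R) (w : list bool) :
  smooth_on W G -> smooth_on W (ipd w G).
Proof. intros H v p Hp. rewrite <- ipd_app. now apply H. Qed.

Lemma ipd_ext_open (W : pt -> Prop) (A B : pt -> R) : open W ->
  (forall q, W q -> A q = B q) -> forall w p, W p -> ipd w A p = ipd w B p.
Proof.
  intros HW E w. induction w as [|b w IH]; intros p Hp; simpl; auto.
  destruct b; unfold pd; apply Derive_ext_loc.
  - apply filter_imp with (2 := locally_fst _ _ (HW p Hp)). intros t Ht. now apply IH.
  - apply filter_imp with (2 := locally_snd _ _ (HW p Hp)). intros t Ht. now apply IH.
Qed.

Lemma pd_swap (W : pt -> Prop) (G : pt -> R) (p : pt) : open W -> smooth_on W G -> W p ->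
  pd true (pd false G) p = pd false (pd true G) p.
Proof.
  destruct p as [x y]. intros HW HG Hp. unfold pd; simpl.
  apply (Schwarz (fun a b => G (a, b))).
  - apply locally_2d_locally. apply filter_imp with (2 := HW _ Hp). intros [u v] Hq.
    destruct (HG nil (u, v) Hq) as [_ [A1 A2]].
    destruct (HG (false :: nil) (u, v) Hq) as [_ [B1 _]].
    destruct (HG (true :: nil) (u, v) Hq) as [_ [_ C2]].
    simpl in *. repeat split; auto.
  - apply continuity_2d_pt_filterlim.
    eapply filterlim_ext; [|exact (proj1 (HG (true :: false :: nil) (x, y) Hp))]. now intros [a b].
  - apply continuity_2d_pt_filterlim.
    eapply filterlim_ext; [|exact (proj1 (HG (false :: true :: nil) (x, y) Hp))]. now intros [a b].
Qed.

Lemma ipd_swap (W : pt -> Prop) (G : pt -> R) (w1 w2 : list bool) (p : pt) :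
  open W -> smooth_on W G -> W p ->
  ipd (w1 ++ false :: true :: w2) G p = ipd (w1 ++ true :: false :: w2) G p.
Proof.
  intros HW HG Hp. rewrite !ipd_app.
  apply (ipd_ext_open W); auto. intros q Hq. simpl.
  symmetry. apply (pd_swap W); auto. now apply smooth_on_ipd.
Qed.

Lemma ipd_repeat_false_true (W : pt -> Prop) (G : pt -> R) : open W -> smooth_on W G ->
  forall a w p, W p ->
  ipd (repeat false a ++ true :: w) G p = ipd (true :: repeat false a ++ w) G p.
Proof.
  intros HW HG. induction a as [|a IH]; intros w p Hp; [reflexivity|].
  transitivity (ipd (false :: true :: repeat false a ++ w) G p).
  - change (ipd (false :: nil) (ipd (repeat false a ++ true :: w) G) p =
            ipd (false :: nil) (ipd (true :: repeat false a ++ w) G) p).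
    apply (ipd_ext_open W); auto.
  - apply (ipd_swap W G nil); auto.
Qed.

Lemma ipd_repeat_true (G : pt -> R) (w : list bool) (j : nat) (x y : R) :
  Derive_n (fun t => ipd w G (t, y)) j x = ipd (repeat true j ++ w) G (x, y).
Proof.
  revert x. induction j as [|j IH]; intros x; [reflexivity|].
  simpl. unfold pd. simpl. apply Derive_ext. intros t. apply IH.
Qed.

Lemma ipd_repeat_false (G : pt -> R) (w : list bool) (j : nat) (x y : R) :
  Derive_n (fun t => ipd w G (x, t)) j y = ipd (repeat false j ++ w) G (x, y).
Proof.
  revert y. induction j as [|j IH]; intros y; [reflexivity|].
  simpl. unfold pd. simpl. apply Derive_ext. intros t. apply IH.
Qed.

(** * Curvilinear coordinates *)

Section Curvilinear.
Variables g1 g2 n1 n2 : R -> R.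
Hypotheses (Hg1 : smooth g1) (Hg2 : smooth g2) (Hn1 : smooth n1) (Hn2 : smooth n2).
Variable f : pt -> R.
Variable O : pt -> Prop.
Hypotheses (HO : open O) (Hf : smooth_on O f).

Definition curvilinear (x y : R) : pt := (g1 x + y * n1 x, g2 x + y * n2 x).
Definition curvilinear_domain (p : pt) : Prop := O (curvilinear (fst p) (snd p)).
Definition pullback (p : pt) : R := f (curvilinear (fst p) (snd p)).

Lemma continuous_curvilinear (p : pt) :
  continuous (fun q : pt => curvilinear (fst q) (snd q)) p.
Proof.
  assert (Hc : forall a b : R -> R, smooth a -> smooth b ->
             continuous (fun q : pt => a (fst q) + snd q * b (fst q)) p).
  { intros a b Ha Hb. destruct p as [x y].
    apply (continuous_plus (fun q : pt => a (fst q)) (fun q : pt => snd q * b (fst q))).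
    - apply continuous_comp; [apply continuous_fst | now apply smooth_continuous].
    - apply (continuous_mult (fun q : pt => snd q) (fun q : pt => b (fst q))).
      + apply continuous_snd.
      + apply continuous_comp; [apply continuous_fst | now apply smooth_continuous]. }
  apply filterlim_locally_pair; [apply locally_filter | apply Hc; auto | apply Hc; auto].
Qed.

Lemma open_curvilinear_domain : open curvilinear_domain.
Proof.
  apply (open_comp (fun q : pt => curvilinear (fst q) (snd q))); auto.
  intros; apply continuous_curvilinear.
Qed.

Lemma is_derive_curvilinear_fst (w : list bool) (x y : R) : curvilinear_domain (x, y) ->
  is_derive (fun t => ipd w f (curvilinear t y)) x
    (ipd (true :: w) f (curvilinear x y) * (Derive g1 x + y * Derive n1 x)
     + ipd (false :: w) f (curvilinear x y) * (Derive g2 x + y * Derive n2 x)).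
Proof.
  intros H.
  apply (is_derive_comp_2d (ipd w f) (curvilinear x y)
          (fun t => g1 t + y * n1 t) (fun t => g2 t + y * n2 t)); auto.
  - now apply smooth_on_differentiable with O.
  - apply is_derive_Rplus; [apply Derive_correct; now apply smooth_ex_derive|].
    apply is_derive_eq_val with (0 * n1 x + y * Derive n1 x); [|ring].
    apply is_derive_Rmult; [apply is_derive_Rconst | apply Derive_correct; now apply smooth_ex_derive].
  - apply is_derive_Rplus; [apply Derive_correct; now apply smooth_ex_derive|].
    apply is_derive_eq_val with (0 * n2 x + y * Derive n2 x); [|ring].
    apply is_derive_Rmult; [apply is_derive_Rconst | apply Derive_correct; now apply smooth_ex_derive].
Qed.

Lemma is_derive_curvilinear_snd (w : list bool) (x y : R) : curvilinear_domain (x, y) ->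
  is_derive (fun t => ipd w f (curvilinear x t)) y
    (ipd (true :: w) f (curvilinear x y) * n1 x + ipd (false :: w) f (curvilinear x y) * n2 x).
Proof.
  intros H.
  apply (is_derive_comp_2d (ipd w f) (curvilinear x y)
          (fun t => g1 x + t * n1 x) (fun t => g2 x + t * n2 x)); auto.
  - now apply smooth_on_differentiable with O.
  - apply is_derive_eq_val with (0 + (1 * n1 x + y * 0)); [|ring].
    apply is_derive_Rplus; [apply is_derive_Rconst|].
    apply (is_derive_Rmult (fun t => t) (fun _ => _)); [apply is_derive_Rid | apply is_derive_Rconst].
  - apply is_derive_eq_val with (0 + (1 * n2 x + y * 0)); [|ring].
    apply is_derive_Rplus; [apply is_derive_Rconst|].
    apply (is_derive_Rmult (fun t => t) (fun _ => _)); [apply is_derive_Rid | apply is_derive_Rconst].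
Qed.

(* A term [(c, k, w)] stands for [c(x) y^k (d^w f)(curvilinear x y)]; every partial
   derivative of [pullback] is a finite sum of such terms. *)
Definition term := ((R -> R) * nat * list bool)%type.

Definition eval_term (tm : term) (p : pt) : R :=
  let '(c, k, w) := tm in c (fst p) * snd p ^ k * ipd w f (curvilinear (fst p) (snd p)).

Definition eval_terms (l : list term) (p : pt) : R :=
  fold_right (fun tm acc => eval_term tm p + acc) 0 l.

Definition derive_term (b : bool) (tm : term) : list term :=
  let '(c, k, w) := tm in
  if b then
    (Derive c, k, w) :: (fun x => c x * Derive g1 x, k, true :: w)
    :: (fun x => c x * Derive n1 x, S k, true :: w)
    :: (fun x => c x * Derive g2 x, k, false :: w)
    :: (fun x => c x * Derive n2 x, S k, false :: w) :: nil
  else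
    (fun x => c x * INR k, pred k, w) :: (fun x => c x * n1 x, k, true :: w)
    :: (fun x => c x * n2 x, k, false :: w) :: nil.

Definition derive_terms (b : bool) (l : list term) : list term := flat_map (derive_term b) l.

Definition smooth_coefs (l : list term) : Prop := List.Forall (fun tm => smooth (fst (fst tm))) l.

Lemma smooth_coefs_derive_terms (b : bool) (l : list term) :
  smooth_coefs l -> smooth_coefs (derive_terms b l).
Proof.
  intros H. unfold derive_terms. induction H as [|[[c k] w] l Hc Hl IH]; simpl; [constructor|].
  apply Forall_app. split; auto. simpl in Hc.
  assert (Hm : forall d, smooth d -> smooth (fun x => c x * d x)) by (intros; now apply smooth_mult).
  destruct b; repeat apply Forall_cons; try apply Forall_nil; simpl.
  - now apply smooth_Derive.
  - apply Hm. now apply smooth_Derive.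
  - apply Hm. now apply smooth_Derive.
  - apply Hm. now apply smooth_Derive.
  - apply Hm. now apply smooth_Derive.
  - apply Hm, smooth_const.
  - now apply Hm.
  - now apply Hm.
Qed.

Lemma eval_terms_app (l1 l2 : list term) (p : pt) :
  eval_terms (l1 ++ l2) p = eval_terms l1 p + eval_terms l2 p.
Proof. induction l1 as [|tm l1 IH]; simpl; [ring | rewrite IH; ring]. Qed.

Lemma is_derive_eval_terms_fst (l : list term) (x y : R) :
  smooth_coefs l -> curvilinear_domain (x, y) ->
  is_derive (fun t => eval_terms l (t, y)) x (eval_terms (derive_terms true l) (x, y)).
Proof.
  intros Hl H. induction Hl as [|tm l Hc Hl IH]; simpl; [apply is_derive_Rconst|].
  rewrite eval_terms_app. apply is_derive_Rplus; [|exact IH].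
  destruct tm as [[c k] w]. simpl in Hc. simpl. eapply is_derive_eq_val.
  - apply is_derive_Rmult; [apply is_derive_Rmult|].
    + apply Derive_correct. now apply smooth_ex_derive.
    + apply is_derive_Rconst.
    + now apply is_derive_curvilinear_fst.
  - simpl. ring.
Qed.

Lemma is_derive_eval_terms_snd (l : list term) (x y : R) :
  smooth_coefs l -> curvilinear_domain (x, y) ->
  is_derive (fun t => eval_terms l (x, t)) y (eval_terms (derive_terms false l) (x, y)).
Proof.
  intros Hl H. induction Hl as [|tm l Hc Hl IH]; simpl; [apply is_derive_Rconst|].
  rewrite eval_terms_app. apply is_derive_Rplus; [|exact IH].
  destruct tm as [[c k] w]. simpl. eapply is_derive_eq_val.
  - apply is_derive_Rmult; [apply is_derive_Rmult|].
    + apply is_derive_Rconst.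
    + apply (is_derive_pow (fun t => t) k y 1). apply is_derive_Rid.
    + now apply is_derive_curvilinear_snd.
  - simpl. ring.
Qed.

Lemma continuous_eval_terms (l : list term) (p : pt) :
  smooth_coefs l -> curvilinear_domain p -> continuous (eval_terms l) p.
Proof.
  intros Hl H. induction Hl as [|[[c k] w] l Hc Hl IH]; simpl; [apply continuous_const|].
  apply (continuous_plus (eval_term (c, k, w)) (eval_terms l)); [|exact IH].
  simpl in Hc. destruct p as [x y]. simpl.
  apply (continuous_mult (fun q : pt => c (fst q) * snd q ^ k)
                         (fun q : pt => ipd w f (curvilinear (fst q) (snd q)))).
  - apply (continuous_mult (fun q : pt => c (fst q)) (fun q : pt => snd q ^ k)).
    + apply continuous_comp; [apply continuous_fst | now apply smooth_continuous].
    + apply (continuous_comp snd (fun t => t ^ k)); [apply continuous_snd|].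
      apply (ex_derive_continuous (K := R_AbsRing) (V := R_NormedModule)).
      eexists. apply (is_derive_pow (fun t => t) k _ 1). apply is_derive_Rid.
  - apply (continuous_comp (fun q : pt => curvilinear (fst q) (snd q)) (ipd w f)).
    + apply continuous_curvilinear.
    + apply (Hf w _ H).
Qed.

Fixpoint terms_of_word (v : list bool) : list term :=
  match v with
  | nil => (fun _ => 1, 0%nat, nil) :: nil
  | b :: v' => derive_terms b (terms_of_word v')
  end.

Lemma smooth_coefs_terms_of_word (v : list bool) : smooth_coefs (terms_of_word v).
Proof.
  induction v as [|b v IH]; simpl.
  - repeat constructor. exact (smooth_const 1).
  - now apply smooth_coefs_derive_terms.
Qed.

Lemma ipd_pullback (v : list bool) (p : pt) : curvilinear_domain p ->
  ipd v pullback p = eval_terms (terms_of_word v) p.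
Proof.
  revert p. induction v as [|b v IH].
  - intros p _. simpl. unfold pullback. ring.
  - intros [x y] H. assert (HW := open_curvilinear_domain _ H).
    simpl. destruct b; unfold pd; simpl.
    + rewrite (Derive_ext_loc _ (fun t => eval_terms (terms_of_word v) (t, y))).
      * apply is_derive_unique, is_derive_eval_terms_fst; auto. apply smooth_coefs_terms_of_word.
      * apply filter_imp with (2 := locally_fst _ _ HW). intros t Ht. now apply IH.
    + rewrite (Derive_ext_loc _ (fun t => eval_terms (terms_of_word v) (x, t))).
      * apply is_derive_unique, is_derive_eval_terms_snd; auto. apply smooth_coefs_terms_of_word.
      * apply filter_imp with (2 := locally_snd _ _ HW). intros t Ht. now apply IH.
Qed.

Lemma smooth_on_pullback : smooth_on curvilinear_domain pullback.
Proof.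
  intros v p Hp. assert (HW := open_curvilinear_domain _ Hp).
  assert (Hl := smooth_coefs_terms_of_word v). split; [|split].
  - apply continuous_ext_loc with (eval_terms (terms_of_word v)).
    + apply filter_imp with (2 := HW). intros q Hq. symmetry. now apply ipd_pullback.
    + now apply continuous_eval_terms.
  - apply ex_derive_ext_loc with (fun t => eval_terms (terms_of_word v) (t, snd p)).
    + apply filter_imp with (2 := locally_fst _ _ HW). intros t Ht. symmetry. now apply ipd_pullback.
    + eexists. destruct p. now apply is_derive_eval_terms_fst.
  - apply ex_derive_ext_loc with (fun t => eval_terms (terms_of_word v) (fst p, t)).
    + apply filter_imp with (2 := locally_snd _ _ HW). intros t Ht. symmetry. now apply ipd_pullback.
    + eexists. destruct p. now apply is_derive_eval_terms_snd.
Qed.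

End Curvilinear.

(** * Expansion in the normal variable *)

Definition smooth_near0 (H : R -> R) (d : R) : Prop :=
  0 < d /\ forall n y, Rabs y < d -> ex_derive (Derive_n H n) y.

Lemma locally_in_ball0 (d y : R) : Rabs y < d -> locally y (fun z => Rabs z < d).
Proof.
  intros Hy. apply (locally_R _ _ (d - Rabs y)); [lra|].
  intros z Hz. pose proof (Rabs_triang_inv z y). lra.
Qed.

Lemma Derive_n_plus_near0 (H1 H2 : R -> R) (d : R) : smooth_near0 H1 d -> smooth_near0 H2 d ->
  forall n y, Rabs y < d ->
  Derive_n (fun t => H1 t + H2 t) n y = Derive_n H1 n y + Derive_n H2 n y.
Proof.
  intros [_ S1] [_ S2] n y Hy.
  apply Derive_n_plus; apply filter_imp with (2 := locally_in_ball0 d y Hy);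
    intros z Hz [|k] _; simpl; auto.
Qed.

Lemma smooth_near0_plus (H1 H2 : R -> R) (d : R) : smooth_near0 H1 d -> smooth_near0 H2 d ->
  smooth_near0 (fun t => H1 t + H2 t) d.
Proof.
  intros S1 S2. split; [apply S1|]. intros n y Hy.
  apply ex_derive_ext_loc with (fun t => Derive_n H1 n t + Derive_n H2 n t).
  - apply filter_imp with (2 := locally_in_ball0 d y Hy). intros z Hz.
    symmetry. now apply (Derive_n_plus_near0 H1 H2 d).
  - apply (ex_derive_plus (Derive_n H1 n) (Derive_n H2 n)); [apply S1 | apply S2]; auto.
Qed.

Lemma smooth_near0_scal (H : R -> R) (d a : R) : smooth_near0 H d -> smooth_near0 (fun t => a * H t) d.
Proof.
  intros [Hd SH]. split; auto. intros n y Hy.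
  apply ex_derive_ext with (fun t => a * Derive_n H n t).
  - intros t. symmetry. apply Derive_n_scal_l.
  - apply ex_derive_scal. auto.
Qed.

Lemma Derive_n_mult_id (H : R -> R) (d : R) : smooth_near0 H d -> forall m y, Rabs y < d ->
  Derive_n (fun t => t * H t) (S m) y = y * Derive_n H (S m) y + INR (S m) * Derive_n H m y.
Proof.
  intros [Hd SH]. induction m as [|m IH]; intros y Hy.
  - change (Derive (fun t => t * H t) y = y * Derive H y + 1 * H y).
    rewrite Derive_mult, Derive_id; [ring | apply ex_derive_id | apply (SH 0%nat y Hy)].
  - change (Derive (Derive_n (fun t => t * H t) (S m)) y
            = y * Derive_n H (S (S m)) y + INR (S (S m)) * Derive_n H (S m) y).
    rewrite (Derive_ext_loc _ (fun z => z * Derive_n H (S m) z + INR (S m) * Derive_n H m z)).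
    2: { apply filter_imp with (2 := locally_in_ball0 d y Hy). intros z Hz. now apply IH. }
    rewrite Derive_plus, Derive_mult, Derive_id, Derive_scal, !S_INR.
    + simpl. ring.
    + apply ex_derive_id.
    + apply (SH (S m) y Hy).
    + apply ex_derive_mult; [apply ex_derive_id | apply (SH (S m) y Hy)].
    + apply ex_derive_scal, (SH m y Hy).
Qed.

Lemma smooth_near0_mult_id (H : R -> R) (d : R) : smooth_near0 H d -> smooth_near0 (fun t => t * H t) d.
Proof.
  intros SH. pose proof SH as [Hd DH]. split; auto. intros [|m] y Hy.
  - simpl. apply ex_derive_mult; [apply ex_derive_id | apply (DH 0%nat y Hy)].
  - apply ex_derive_ext_loc with (fun z => z * Derive_n H (S m) z + INR (S m) * Derive_n H m z).
    + apply filter_imp with (2 := locally_in_ball0 d y Hy). intros z Hz.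
      symmetry. now apply (Derive_n_mult_id H d).
    + apply (ex_derive_plus (fun z => z * Derive_n H (S m) z) (fun z => INR (S m) * Derive_n H m z)).
      * apply ex_derive_mult; [apply ex_derive_id | apply (DH (S m) y Hy)].
      * apply ex_derive_scal, (DH m y Hy).
Qed.

(* [falling m a = m (m - 1) ... (m - a + 1)], which vanishes when [m < a]. *)
Fixpoint falling (m a : nat) : R :=
  match a with O => 1 | S a' => INR m * falling (pred m) a' end.

(* For [m < a] both sides vanish, so the truncated [m - a] is harmless. *)
Lemma Derive_n_pow_mult_0 (a : nat) (H : R -> R) (d : R) : smooth_near0 H d ->
  smooth_near0 (fun t => t ^ a * H t) d /\
  forall m, Derive_n (fun t => t ^ a * H t) m 0 = falling m a * Derive_n H (m - a) 0.
Proof.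
  revert H. induction a as [|a IH]; intros H SH.
  - split.
    + destruct SH as [Hd DH]. split; auto. intros n y Hy.
      apply ex_derive_ext with (Derive_n H n); [intros; apply Derive_n_ext; intros; simpl; ring|auto].
    + intros m. simpl. rewrite Nat.sub_0_r, Rmult_1_l. apply Derive_n_ext. intros; ring.
  - destruct (IH H SH) as [S1 E1].
    assert (Ext : forall t, t * (t ^ a * H t) = t ^ S a * H t) by (intros; simpl; ring).
    split.
    + destruct (smooth_near0_mult_id _ d S1) as [Hd S2]. split; auto. intros n y Hy.
      apply ex_derive_ext with (Derive_n (fun t => t * (t ^ a * H t)) n); auto.
      intros; now apply Derive_n_ext.
    + intros [|m].
      * simpl. ring.
      * rewrite <- (Derive_n_ext _ _ (S m) 0 Ext), (Derive_n_mult_id _ d S1 m 0);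
          [|rewrite Rabs_R0; apply S1].
        rewrite !E1. cbn [falling pred]. replace (m - a)%nat with (S m - S a)%nat by lia. ring.
Qed.

Lemma Derive_n_0_of_vanishing_right (H : R -> R) (d d' : R) : smooth_near0 H d -> 0 < d' ->
  (forall y, 0 < y < d' -> H y = 0) -> forall m, Derive_n H m 0 = 0.
Proof.
  intros [Hd SH] Hd' Z m.
  set (d0 := Rmin d d').
  assert (Hd0 : 0 < d0) by (apply Rmin_pos; auto).
  assert (Zm : forall y, 0 < y < d0 -> Derive_n H m y = 0).
  { intros y Hy. pose proof (Rmin_l d d'). pose proof (Rmin_r d d').
    destruct m as [|m]; [apply Z; unfold d0 in *; lra|].
    rewrite (Derive_n_ext_loc H (fun _ => 0)); [apply Derive_n_const|].
    apply (locally_R _ _ (Rmin y (d' - y))); [apply Rmin_pos; unfold d0 in *; lra|].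
    intros z Hz. apply Z. pose proof (Rmin_l y (d' - y)). pose proof (Rmin_r y (d' - y)).
    apply Rabs_def2 in Hz. lra. }
  assert (Hc : continuous (Derive_n H m) 0).
  { apply (ex_derive_continuous (K := R_AbsRing) (V := R_NormedModule)).
    apply SH. now rewrite Rabs_R0. }
  apply (filterlim_locally_unique (F := at_right 0) (Derive_n H m)).
  - exact (filterlim_filter_le_1 _ (filter_le_within (F := locally 0) (fun y => 0 < y)) Hc).
  - apply filterlim_ext_loc with (fun _ => 0); [|apply filterlim_const].
    exists (mkposreal d0 Hd0). intros y Hy Hy0. symmetry. apply Zm.
    split; [exact Hy0|]. apply Rabs_def2 in Hy. rewrite Rminus_0_r in Hy. simpl in Hy. lra.
Qed.

Section EtaExpansion.
Variables (G : pt -> R) (W : pt -> Prop) (x dW : R).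
Hypotheses (HG : smooth_on W G) (HdW : 0 < dW) (HW : forall y, Rabs y < dW -> W (x, y)).

Lemma smooth_near0_ipd (w : list bool) : smooth_near0 (fun y => ipd w G (x, y)) dW.
Proof.
  split; auto. intros n y Hy.
  apply ex_derive_ext with (fun y => ipd (repeat false n ++ w) G (x, y)).
  - intros t. symmetry. apply ipd_repeat_false.
  - apply (HG (repeat false n ++ w) (x, y) (HW y Hy)).
Qed.

(* An [eta_poly] lists terms [c * y^a * (d^w G)(x, y)], a polynomial in [y] whose
   coefficients are partial derivatives of [G]. *)
Definition eta_poly := list (R * nat * list bool).

Definition eval_eta_poly (pl : eta_poly) (y : R) : R :=
  fold_right (fun tm acc => let '(c, a, w) := tm in c * (y ^ a * ipd w G (x, y)) + acc) 0 pl.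

Definition eta_poly_Derive_n_0 (pl : eta_poly) (m : nat) : R :=
  fold_right (fun tm acc => let '(c, a, w) := tm in
     c * (falling m a * ipd (repeat false (m - a) ++ w) G (x, 0)) + acc) 0 pl.

Lemma Derive_n_eval_eta_poly_0 (pl : eta_poly) :
  smooth_near0 (eval_eta_poly pl) dW /\
  forall m, Derive_n (eval_eta_poly pl) m 0 = eta_poly_Derive_n_0 pl m.
Proof.
  induction pl as [|[[c a] w] pl IH].
  - split.
    + split; auto. intros n y _. apply ex_derive_ext with (Derive_n (fun _ : R => 0) n).
      * intros t. now apply Derive_n_ext.
      * apply smooth_const.
    + intros [|m]; [reflexivity|].
      rewrite (Derive_n_ext (eval_eta_poly nil) (fun _ => 0)) by reflexivity. apply Derive_n_const.
  - destruct IH as [S1 E1].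
    destruct (Derive_n_pow_mult_0 a _ dW (smooth_near0_ipd w)) as [S2 E2].
    pose proof (smooth_near0_scal _ _ c S2) as S3.
    split; [exact (smooth_near0_plus _ _ dW S3 S1)|].
    intros m.
    rewrite (Derive_n_ext (eval_eta_poly _)
               (fun t => c * (t ^ a * ipd w G (x, t)) + eval_eta_poly pl t))
      by reflexivity.
    rewrite (Derive_n_plus_near0 _ _ dW S3 S1 m 0) by (rewrite Rabs_R0; exact HdW).
    rewrite Derive_n_scal_l, E2, E1, ipd_repeat_false. reflexivity.
Qed.

End EtaExpansion.

(** * Normal coordinates along a unit-speed curve *)

Section NormalCoordinates.
Variables g1 g2 : R -> R.
Hypotheses (Hg1 : smooth g1) (Hg2 : smooth g2).
Hypothesis unit_speed : forall t, Derive g1 t ^ 2 + Derive g2 t ^ 2 = 1.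
Variable sg : R.
Hypothesis Hsg : sg = 1 \/ sg = -1.

Definition normal1 (x : R) : R := sg * - Derive g2 x.
Definition normal2 (x : R) : R := sg * Derive g1 x.

Definition curvature (t : R) : R :=
  Derive g1 t * Derive (Derive g2) t - Derive g2 t * Derive (Derive g1) t.
Definition curvature' (t : R) : R :=
  Derive g1 t * Derive (Derive (Derive g2)) t - Derive g2 t * Derive (Derive (Derive g1)) t.

Definition normal_map : R -> R -> pt := curvilinear g1 g2 normal1 normal2.
Definition normal_domain (O : pt -> Prop) : pt -> Prop := curvilinear_domain g1 g2 normal1 normal2 O.
Definition normal_pullback (f : pt -> R) : pt -> R := pullback g1 g2 normal1 normal2 f.

Lemma smooth_normal1 : smooth normal1.
Proof. apply smooth_mult; [apply smooth_const | apply smooth_opp, smooth_Derive, Hg2]. Qed.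

Lemma smooth_normal2 : smooth normal2.
Proof. apply smooth_mult; [apply smooth_const | apply smooth_Derive, Hg1]. Qed.

Lemma open_normal_domain (O : pt -> Prop) : open O -> open (normal_domain O).
Proof.
  intros HO. apply open_curvilinear_domain; auto using smooth_normal1, smooth_normal2.
Qed.

Lemma smooth_on_normal_pullback (O : pt -> Prop) (f : pt -> R) : open O -> smooth_on O f ->
  smooth_on (normal_domain O) (normal_pullback f).
Proof. intros HO Hf. apply smooth_on_pullback; auto using smooth_normal1, smooth_normal2. Qed.

Lemma Derive_normal1 (x : R) : Derive normal1 x = sg * - Derive (Derive g2) x.
Proof. unfold normal1. now rewrite Derive_scal, Derive_opp. Qed.

Lemma Derive_normal2 (x : R) : Derive normal2 x = sg * Derive (Derive g1) x.
Proof. unfold normal2. now rewrite Derive_scal. Qed.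

Lemma Derive2_normal1 (x : R) : Derive (Derive normal1) x = sg * - Derive (Derive (Derive g2)) x.
Proof. rewrite (Derive_ext _ _ _ Derive_normal1). now rewrite Derive_scal, Derive_opp. Qed.

Lemma Derive2_normal2 (x : R) : Derive (Derive normal2) x = sg * Derive (Derive (Derive g1)) x.
Proof. rewrite (Derive_ext _ _ _ Derive_normal2). now rewrite Derive_scal. Qed.

Lemma unit_speed_Derive (t : R) :
  Derive g1 t * Derive (Derive g1) t + Derive g2 t * Derive (Derive g2) t = 0.
Proof.
  set (a1 := Derive g1). set (a2 := Derive g2).
  assert (D : is_derive (fun x => a1 x * a1 x + a2 x * a2 x) t
    (Derive a1 t * a1 t + a1 t * Derive a1 t + (Derive a2 t * a2 t + a2 t * Derive a2 t))).
  { apply is_derive_Rplus; apply is_derive_Rmult; apply Derive_correct;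
      apply smooth_ex_derive, smooth_Derive; auto. }
  apply is_derive_constant_fun in D; [lra|].
  assert (U : forall y, a1 y * a1 y + a2 y * a2 y = 1).
  { intros y. rewrite <- (unit_speed y). unfold a1, a2. ring. }
  intros x. now rewrite !U.
Qed.

Lemma unit_speed_Derive2 (t : R) :
  Derive (Derive g1) t ^ 2 + Derive (Derive g2) t ^ 2
  + Derive g1 t * Derive (Derive (Derive g1)) t + Derive g2 t * Derive (Derive (Derive g2)) t = 0.
Proof.
  set (a1 := Derive g1). set (a2 := Derive g2).
  assert (D : is_derive (fun x => a1 x * Derive a1 x + a2 x * Derive a2 x) t
    (Derive a1 t * Derive a1 t + a1 t * Derive (Derive a1) t
     + (Derive a2 t * Derive a2 t + a2 t * Derive (Derive a2) t))).
  { assert (S1 := smooth_Derive _ Hg1). assert (S2 := smooth_Derive _ Hg2).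
    assert (S11 := smooth_Derive _ S1). assert (S22 := smooth_Derive _ S2).
    apply is_derive_Rplus; apply is_derive_Rmult; apply Derive_correct;
      apply smooth_ex_derive; assumption. }
  apply is_derive_constant_fun in D; [lra|].
  intros x. unfold a1, a2. now rewrite !unit_speed_Derive.
Qed.

(* The Frenet equations for the frame [(g1', g2'), (-g2', g1')], read off by
   decomposing the second and third derivatives of the curve in that frame. *)
Lemma Derive2_g1 (t : R) : Derive (Derive g1) t = - curvature t * Derive g2 t.
Proof.
  pose proof (unit_speed t). pose proof (unit_speed_Derive t). unfold curvature.
  transitivity (Derive (Derive g1) t * (Derive g1 t ^ 2 + Derive g2 t ^ 2)
    - Derive g1 t * (Derive g1 t * Derive (Derive g1) t + Derive g2 t * Derive (Derive g2) t));
    [|ring]. rewrite H, H0. ring.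
Qed.

Lemma Derive2_g2 (t : R) : Derive (Derive g2) t = curvature t * Derive g1 t.
Proof.
  pose proof (unit_speed t). pose proof (unit_speed_Derive t). unfold curvature.
  transitivity (Derive (Derive g2) t * (Derive g1 t ^ 2 + Derive g2 t ^ 2)
    - Derive g2 t * (Derive g1 t * Derive (Derive g1) t + Derive g2 t * Derive (Derive g2) t));
    [|ring]. rewrite H, H0. ring.
Qed.

Lemma Derive3_g1 (t : R) :
  Derive (Derive (Derive g1)) t = - curvature' t * Derive g2 t - curvature t ^ 2 * Derive g1 t.
Proof.
  pose proof (unit_speed t) as U. pose proof (unit_speed_Derive2 t) as U2.
  rewrite Derive2_g1, Derive2_g2 in U2. unfold curvature'.
  set (c1 := Derive (Derive (Derive g1)) t) in *. set (c2 := Derive (Derive (Derive g2)) t) in *.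
  set (a1 := Derive g1 t) in *. set (a2 := Derive g2 t) in *. set (K := curvature t) in *.
  transitivity (c1 * (a1 ^ 2 + a2 ^ 2) - a1 * ((- K * a2) ^ 2 + (K * a1) ^ 2 + a1 * c1 + a2 * c2)
    + K ^ 2 * a1 * (a1 ^ 2 + a2 ^ 2 - 1)); [|ring].
  rewrite U, U2. ring.
Qed.

Lemma Derive3_g2 (t : R) :
  Derive (Derive (Derive g2)) t = curvature' t * Derive g1 t - curvature t ^ 2 * Derive g2 t.
Proof.
  pose proof (unit_speed t) as U. pose proof (unit_speed_Derive2 t) as U2.
  rewrite Derive2_g1, Derive2_g2 in U2. unfold curvature'.
  set (c1 := Derive (Derive (Derive g1)) t) in *. set (c2 := Derive (Derive (Derive g2)) t) in *.
  set (a1 := Derive g1 t) in *. set (a2 := Derive g2 t) in *. set (K := curvature t) in *.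
  transitivity (c2 * (a1 ^ 2 + a2 ^ 2) - a2 * ((- K * a2) ^ 2 + (K * a1) ^ 2 + a1 * c1 + a2 * c2)
    + K ^ 2 * a2 * (a1 ^ 2 + a2 ^ 2 - 1)); [|ring].
  rewrite U, U2. ring.
Qed.

Lemma helmholtz_normal_coordinates (O : pt -> Prop) (f : pt -> R) (alpha k x y : R) :
  open O -> smooth_on O f -> normal_domain O (x, y) ->
  alpha * lap f (normal_map x y) + k ^ 2 * f (normal_map x y) = 0 ->
  let U := normal_pullback f in
  let h := 1 - sg * curvature x * y in
  alpha * h ^ 3 * ipd (false :: false :: nil) U (x, y) + k ^ 2 * h ^ 3 * U (x, y)
  + alpha * h * ipd (true :: true :: nil) U (x, y)
  - alpha * (- sg * curvature' x * y) * ipd (true :: nil) U (x, y)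
  - alpha * sg * curvature x * h ^ 2 * ipd (false :: nil) U (x, y) = 0.
Proof.
  intros HO Hf HW Hpde U h.
  change (U (x, y)) with (ipd nil U (x, y)).
  unfold U, normal_pullback.
  rewrite !(ipd_pullback g1 g2 normal1 normal2 Hg1 Hg2 smooth_normal1 smooth_normal2 f O HO Hf)
    by exact HW.
  cbn -[Derive pow ipd INR curvature curvature'].
  change (INR 0) with 0.
  rewrite !(Derive_ext (Derive (fun _ : R => 1)) (fun _ => 0)) by (intros; apply Derive_const).
  rewrite !Derive_const.
  rewrite (Derive_ext (fun t => 1 * Derive g1 t) (Derive g1)) by (intros; ring).
  rewrite (Derive_ext (fun t => 1 * Derive g2 t) (Derive g2)) by (intros; ring).
  rewrite (Derive_ext (fun t => 1 * Derive normal1 t) (Derive normal1)) by (intros; ring).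
  rewrite (Derive_ext (fun t => 1 * Derive normal2 t) (Derive normal2)) by (intros; ring).
  rewrite Derive2_normal1, Derive2_normal2, !Derive_normal1, !Derive_normal2.
  rewrite Derive3_g1, Derive3_g2, !Derive2_g1, !Derive2_g2.
  unfold lap, pd in Hpde. fold (normal_map x y).
  change (alpha * (ipd (true :: true :: nil) f (normal_map x y)
                   + ipd (false :: false :: nil) f (normal_map x y))
          + k ^ 2 * ipd nil f (normal_map x y) = 0) in Hpde.
  unfold h, normal1, normal2. assert (U1 := unit_speed x).
  set (K := curvature x). set (K' := curvature' x).
  set (a1 := Derive g1 x) in *. set (a2 := Derive g2 x) in *.
  set (F := normal_map x y) in *.
  set (f0 := ipd nil f F) in *.
  set (fxx := ipd (true :: true :: nil) f F) in *. set (fyy := ipd (false :: false :: nil) f F) in *.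
  clearbody K K' a1 a2 F f0 fxx fyy.
  destruct Hsg as [-> | ->].
  - transitivity ((1 - 1 * K * y) ^ 3 * (alpha * (a1 ^ 2 + a2 ^ 2) * (fxx + fyy) + k ^ 2 * f0));
      [ring|]. rewrite U1, Rmult_1_r, Hpde. ring.
  - transitivity ((1 - (-1) * K * y) ^ 3 * (alpha * (a1 ^ 2 + a2 ^ 2) * (fxx + fyy) + k ^ 2 * f0));
      [ring|]. rewrite U1, Rmult_1_r, Hpde. ring.
Qed.

Definition trace_dn (f : pt -> R) (j : nat) (z : R) : R :=
  ipd (repeat false j) (normal_pullback f) (z, 0).

Lemma Derive_n_trace_dn (f : pt -> R) (j i : nat) (z : R) :
  Derive_n (trace_dn f j) i z = ipd (repeat true i ++ repeat false j) (normal_pullback f) (z, 0).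
Proof. apply ipd_repeat_true. Qed.

Lemma repeat_false_app_cons (j : nat) (w : list bool) :
  repeat false j ++ false :: w = false :: (repeat false j ++ w).
Proof. induction j as [|j IH]; simpl; [reflexivity | now rewrite IH]. Qed.

Lemma trace_dn_app_nil (f : pt -> R) (j : nat) (z : R) :
  ipd (repeat false j ++ nil) (normal_pullback f) (z, 0) = trace_dn f j z.
Proof. now rewrite app_nil_r. Qed.

Lemma trace_dn_app_false (f : pt -> R) (j : nat) (z : R) :
  ipd (repeat false j ++ false :: nil) (normal_pullback f) (z, 0) = trace_dn f (S j) z.
Proof. now rewrite repeat_false_app_cons, app_nil_r. Qed.

Lemma trace_dn_app_false2 (f : pt -> R) (j : nat) (z : R) :
  ipd (repeat false j ++ false :: false :: nil) (normal_pullback f) (z, 0) = trace_dn f (S (S j)) z.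
Proof. now rewrite !repeat_false_app_cons, app_nil_r. Qed.

Section Traces.
Variables (O : pt -> Prop) (f : pt -> R).
Hypotheses (HO : open O) (Hf : smooth_on O f).

Let W := normal_domain O.
Let U := normal_pullback f.
Let HW : open W := open_normal_domain O HO.
Let HU : smooth_on W U := smooth_on_normal_pullback O f HO Hf.

Lemma trace_dn_app_true (j : nat) (z : R) : W (z, 0) ->
  ipd (repeat false j ++ true :: nil) U (z, 0) = Derive_n (trace_dn f j) 1 z.
Proof.
  intros Hz. rewrite (ipd_repeat_false_true W U HW HU j nil _ Hz).
  now rewrite Derive_n_trace_dn, app_nil_r.
Qed.

Lemma trace_dn_app_true2 (j : nat) (z : R) : W (z, 0) ->
  ipd (repeat false j ++ true :: true :: nil) U (z, 0) = Derive_n (trace_dn f j) 2 z.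
Proof.
  intros Hz. rewrite (ipd_repeat_false_true W U HW HU j (true :: nil) _ Hz).
  rewrite Derive_n_trace_dn. simpl.
  change (ipd (true :: nil) (ipd (repeat false j ++ true :: nil) U) (z, 0) =
          ipd (true :: nil) (ipd (true :: repeat false j) U) (z, 0)).
  apply (ipd_ext_open W); auto. intros q Hq.
  now rewrite (ipd_repeat_false_true W U HW HU j nil _ Hq), app_nil_r.
Qed.

(* The Helmholtz equation in normal coordinates has coefficients polynomial in the
   normal variable; differentiating it [m] times at the boundary expresses the
   [(m+2)]-th normal derivative through lower ones and their tangential derivatives.
   [dl] is the slope of the Lame coefficient [1 + dl * y]. *)
Lemma normal_derivative_recursion (alpha k x : R) (m : nat) (d' : R) :
  W (x, 0) -> 0 < d' ->
  (forall y, 0 < y < d' -> alpha * lap f (normal_map x y) + k ^ 2 * f (normal_map x y) = 0) ->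
  let dl := - sg * curvature x in
  alpha * trace_dn f (S (S m)) x
  + 3 * alpha * dl * falling m 1 * trace_dn f (S (S (m - 1))) x
  + 3 * alpha * dl ^ 2 * falling m 2 * trace_dn f (S (S (m - 2))) x
  + alpha * dl ^ 3 * falling m 3 * trace_dn f (S (S (m - 3))) x
  + k ^ 2 * trace_dn f m x
  + 3 * k ^ 2 * dl * falling m 1 * trace_dn f (m - 1) x
  + 3 * k ^ 2 * dl ^ 2 * falling m 2 * trace_dn f (m - 2) x
  + k ^ 2 * dl ^ 3 * falling m 3 * trace_dn f (m - 3) x
  + alpha * Derive_n (trace_dn f m) 2 x
  + alpha * dl * falling m 1 * Derive_n (trace_dn f (m - 1)) 2 x
  + alpha * sg * curvature' x * falling m 1 * Derive_n (trace_dn f (m - 1)) 1 x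
  - alpha * sg * curvature x * trace_dn f (S m) x
  - 2 * alpha * sg * curvature x * dl * falling m 1 * trace_dn f (S (m - 1)) x
  - alpha * sg * curvature x * dl ^ 2 * falling m 2 * trace_dn f (S (m - 2)) x = 0.
Proof.
  intros Hx Hd' Hpde dl.
  destruct (locally_snd _ _ (HW _ Hx)) as [d Hd]. cbn [fst snd] in Hd.
  assert (HWy : forall y, Rabs y < d -> W (x, y)).
  { intros y Hy. apply Hd. unfold ball; simpl; unfold AbsRing_ball, abs, minus, plus, opp; simpl.
    now rewrite Ropp_0, Rplus_0_r. }
  set (w_yy := false :: false :: nil). set (w_ss := true :: true :: nil).
  set (pl := (alpha, 0%nat, w_yy) :: (3 * alpha * dl, 1%nat, w_yy) :: (3 * alpha * dl ^ 2, 2%nat, w_yy)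
          :: (alpha * dl ^ 3, 3%nat, w_yy)
          :: (k ^ 2, 0%nat, nil) :: (3 * k ^ 2 * dl, 1%nat, nil) :: (3 * k ^ 2 * dl ^ 2, 2%nat, nil)
          :: (k ^ 2 * dl ^ 3, 3%nat, nil)
          :: (alpha, 0%nat, w_ss) :: (alpha * dl, 1%nat, w_ss)
          :: (alpha * sg * curvature' x, 1%nat, true :: nil)
          :: (- alpha * sg * curvature x, 0%nat, false :: nil)
          :: (- 2 * alpha * sg * curvature x * dl, 1%nat, false :: nil)
          :: (- alpha * sg * curvature x * dl ^ 2, 2%nat, false :: nil) :: nil : eta_poly).
  destruct (Derive_n_eval_eta_poly_0 U W x d HU (cond_pos d) HWy pl) as [S1 E1].
  assert (Hd0 : 0 < Rmin d d') by (apply Rmin_pos; [apply cond_pos | exact Hd']).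
  assert (Z := Derive_n_0_of_vanishing_right _ _ _ S1 Hd0).
  assert (HZ : forall y, 0 < y < Rmin d d' -> eval_eta_poly U x pl y = 0).
  { intros y Hy. pose proof (Rmin_l d d'). pose proof (Rmin_r d d').
    assert (Hy' : W (x, y)) by (apply HWy; rewrite Rabs_right; lra).
    pose proof (helmholtz_normal_coordinates O f alpha k x y HO Hf Hy' (Hpde y ltac:(lra))) as C.
    cbv zeta in C. change (normal_pullback f (x, y)) with (ipd nil (normal_pullback f) (x, y)) in C.
    rewrite <- C. unfold eval_eta_poly, pl, w_yy, w_ss, dl, U. cbn [fold_right]. ring. }
  specialize (Z HZ m). rewrite E1 in Z.
  unfold eta_poly_Derive_n_0, pl, w_yy, w_ss in Z. cbn [fold_right] in Z.
  unfold U in Z.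
  rewrite !trace_dn_app_false2, !trace_dn_app_false, !trace_dn_app_nil in Z.
  rewrite !trace_dn_app_true2, !trace_dn_app_true in Z by exact Hx.
  rewrite !Nat.sub_0_r in Z. change (falling m 0) with 1 in Z.
  rewrite <- Z. ring.
Qed.

End Traces.

Lemma smooth_curvature : smooth curvature.
Proof.
  assert (S1 := smooth_Derive _ Hg1). assert (S2 := smooth_Derive _ Hg2).
  apply smooth_minus; apply smooth_mult; auto; now apply smooth_Derive.
Qed.

Lemma smooth_curvature' : smooth curvature'.
Proof.
  assert (S1 := smooth_Derive _ Hg1). assert (S2 := smooth_Derive _ Hg2).
  assert (S11 := smooth_Derive _ S1). assert (S22 := smooth_Derive _ S2).
  apply smooth_minus; apply smooth_mult; auto; now apply smooth_Derive.
Qed.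

Section Representability.
Variables alpha k s : R.

Definition admissible_at (O : pt -> Prop) (f : pt -> R) (x : R) : Prop :=
  normal_domain O (x, 0) /\
  exists d, 0 < d /\
    forall y, 0 < y < d -> alpha * lap f (normal_map x y) + k ^ 2 * f (normal_map x y) = 0.

Definition admissible (f : pt -> R) : Prop :=
  exists O, open O /\ smooth_on O f /\ locally s (admissible_at O f).

Lemma admissible_ex_derive_trace (f : pt -> R) : admissible f ->
  locally s (fun x => forall j i, ex_derive (Derive_n (trace_dn f j) i) x).
Proof.
  intros [O [HO [Hf Hadm]]]. apply filter_imp with (2 := Hadm). intros x [Hx _] j i.
  apply ex_derive_ext with (fun z => ipd (repeat true i ++ repeat false j) (normal_pullback f) (z, 0)).
  - intros z. symmetry. apply Derive_n_trace_dn.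
  - apply (smooth_on_normal_pullback O f HO Hf (repeat true i ++ repeat false j) (x, 0) Hx).
Qed.

(* [(c, b, j)] stands for [c * d_tau^j] applied to the Dirichlet trace ([b = false])
   or to the Neumann trace ([b = true]). *)
Definition comb_term := ((R -> R) * bool * nat)%type.
Definition comb := list comb_term.

Definition eval_comb (f : pt -> R) (l : comb) (x : R) : R :=
  fold_right (fun (t : comb_term) acc => let '(c, b, j) := t in
    c x * Derive_n (trace_dn f (if b then 1%nat else 0%nat)) j x + acc) 0 l.

Definition comb_ok (K : nat) (l : comb) : Prop :=
  List.Forall (fun t => smooth (fst (fst t)) /\ (snd t <= K)%nat) l.

Definition representable (K : nat) (phi : (pt -> R) -> R -> R) : Prop :=
  exists l, comb_ok K l /\
    forall f, admissible f -> locally s (fun x => phi f x = eval_comb f l x).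

Lemma eval_comb_app (f : pt -> R) (l1 l2 : comb) (x : R) :
  eval_comb f (l1 ++ l2) x = eval_comb f l1 x + eval_comb f l2 x.
Proof. induction l1 as [|[[c b] j] l1 IH]; simpl; [ring | rewrite IH; ring]. Qed.

Lemma representable_ext (K : nat) (phi psi : (pt -> R) -> R -> R) : representable K phi ->
  (forall f, admissible f -> locally s (fun x => psi f x = phi f x)) -> representable K psi.
Proof.
  intros [l [Hl E]] Hpp. exists l. split; auto. intros f Hf.
  apply filter_imp with (2 := filter_and _ _ (E f Hf) (Hpp f Hf)). intros x [A B]. congruence.
Qed.

Lemma representable_mono (K K' : nat) (phi : (pt -> R) -> R -> R) :
  (K <= K')%nat -> representable K phi -> representable K' phi.
Proof.
  intros HK [l [Hl E]]. exists l. split; auto.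
  eapply Forall_impl; [|exact Hl]. intros t [A B]. split; auto. lia.
Qed.

Lemma representable_plus (K : nat) (phi psi : (pt -> R) -> R -> R) :
  representable K phi -> representable K psi -> representable K (fun f x => phi f x + psi f x).
Proof.
  intros [l1 [H1 E1]] [l2 [H2 E2]]. exists (l1 ++ l2). split; [now apply Forall_app|].
  intros f Hf. apply filter_imp with (2 := filter_and _ _ (E1 f Hf) (E2 f Hf)).
  intros x [A B]. now rewrite eval_comb_app, A, B.
Qed.

Definition scale_comb (c : R -> R) (l : comb) : comb :=
  map (fun t : comb_term => let '(c', b, j) := t in (fun x => c x * c' x, b, j)) l.

Lemma eval_comb_scale (f : pt -> R) (c : R -> R) (l : comb) (x : R) :
  eval_comb f (scale_comb c l) x = c x * eval_comb f l x.
Proof. induction l as [|[[c' b] j] l IH]; simpl; [ring | rewrite IH; ring]. Qed.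

Lemma representable_scal (K : nat) (c : R -> R) (phi : (pt -> R) -> R -> R) :
  smooth c -> representable K phi -> representable K (fun f x => c x * phi f x).
Proof.
  intros Hc [l [H E]]. exists (scale_comb c l). split.
  - clear E. induction H as [|[[c' b] j] l [Hc' Hj] Hl IH]; simpl; constructor; auto.
    split; auto. now apply smooth_mult.
  - intros f Hf. apply filter_imp with (2 := E f Hf). intros x Ex.
    now rewrite eval_comb_scale, Ex.
Qed.

Definition derive_comb (l : comb) : comb :=
  flat_map (fun t : comb_term => let '(c, b, j) := t in (Derive c, b, j) :: (c, b, S j) :: nil) l.

Lemma is_derive_eval_comb (f : pt -> R) (l : comb) (x : R) :
  List.Forall (fun t => smooth (fst (fst t))) l ->
  (forall j i, ex_derive (Derive_n (trace_dn f j) i) x) ->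
  is_derive (eval_comb f l) x (eval_comb f (derive_comb l) x).
Proof.
  intros Hl Hex. induction Hl as [|[[c b] j] l Hc Hl IH]; simpl; [apply is_derive_Rconst|].
  set (T := trace_dn f (if b then 1%nat else 0%nat)).
  apply is_derive_eq_val with
    ((Derive c x * Derive_n T j x + c x * Derive_n T (S j) x) + eval_comb f (derive_comb l) x);
    [|simpl; ring].
  apply is_derive_Rplus; auto. apply is_derive_Rmult; apply Derive_correct; [|apply Hex].
  now apply smooth_ex_derive.
Qed.

Lemma representable_Derive (K : nat) (phi : (pt -> R) -> R -> R) :
  representable K phi -> representable (S K) (fun f x => Derive (phi f) x).
Proof.
  intros [l [H E]]. exists (derive_comb l). split.
  - clear E. induction H as [|[[c b] j] l [Hc Hj] Hl IH]; simpl in *; [constructor|].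
    apply Forall_cons; [split; [now apply smooth_Derive | simpl; lia]|].
    apply Forall_cons; [split; [exact Hc | simpl; lia]|]. exact IH.
  - intros f Hf.
    apply filter_imp with (2 := filter_and _ _ (locally_locally _ _ (E f Hf))
                                             (admissible_ex_derive_trace f Hf)).
    intros x [Ex Hx]. rewrite (Derive_ext_loc _ (eval_comb f l)); [|exact Ex].
    apply is_derive_unique, is_derive_eval_comb; auto.
    eapply Forall_impl; [|exact H]. now intros t [A _].
Qed.

Lemma representable_Derive_n (K : nat) (phi : (pt -> R) -> R -> R) : representable K phi ->
  forall i, representable (i + K) (fun f x => Derive_n (phi f) i x).
Proof.
  intros H. induction i as [|i IH].
  - apply (representable_ext _ _ _ H). intros f _. now apply filter_forall.
  - apply (representable_Derive _ _ IH).
Qed.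

Lemma representable_trace (b : bool) (i : nat) :
  representable i (fun f x => Derive_n (trace_dn f (if b then 1%nat else 0%nat)) i x).
Proof.
  exists ((fun _ => 1, b, i) :: nil). split.
  - apply Forall_cons; [split; [exact (smooth_const 1) | simpl; lia] | apply Forall_nil].
  - intros f _. apply filter_forall. intros x. simpl. ring.
Qed.

(* [(c, m, i)] stands for [c * d_tau^i] applied to the [m]-th normal derivative trace. *)
Definition trace_term := ((R -> R) * nat * nat)%type.

Definition eval_trace_comb (f : pt -> R) (q : list trace_term) (x : R) : R :=
  fold_right (fun (t : trace_term) acc => let '(c, m, i) := t in
    c x * Derive_n (trace_dn f m) i x + acc) 0 q.

Lemma representable_eval_trace_comb (K n : nat) (q : list trace_term) :
  List.Forall (fun t => smooth (fst (fst t)) /\ (snd (fst t) <= n)%nat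
                        /\ (snd t + snd (fst t) <= K)%nat) q ->
  (forall m, (m <= n)%nat -> forall i, representable (i + m) (fun f x => Derive_n (trace_dn f m) i x)) ->
  representable K (fun f x => eval_trace_comb f q x).
Proof.
  intros Hq IH. induction Hq as [|[[c m] i] q [Hc [Hm Hi]] Hq IHq]; simpl in *.
  - exists nil. split; [constructor|]. intros f _. now apply filter_forall.
  - apply representable_plus; auto. apply representable_scal; auto.
    eapply representable_mono; [exact Hi|]. now apply IH.
Qed.

Definition dlame (z : R) : R := - sg * curvature z.

(* The right-hand side of [normal_derivative_recursion], solved for the [(m+2)]-th trace. *)
Definition recursion_comb (m : nat) : list trace_term :=
  (fun z => -(3 * dlame z * falling m 1), (S (S m) - 1)%nat, 0%nat)
  :: (fun z => -(3 * dlame z ^ 2 * falling m 2), (S (S m) - 2)%nat, 0%nat)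
  :: (fun z => -(dlame z ^ 3 * falling m 3), (S (S m) - 3)%nat, 0%nat)
  :: (fun _ => -(k ^ 2 / alpha), m, 0%nat)
  :: (fun z => -(3 * (k ^ 2 / alpha) * dlame z * falling m 1), (m - 1)%nat, 0%nat)
  :: (fun z => -(3 * (k ^ 2 / alpha) * dlame z ^ 2 * falling m 2), (m - 2)%nat, 0%nat)
  :: (fun z => -((k ^ 2 / alpha) * dlame z ^ 3 * falling m 3), (m - 3)%nat, 0%nat)
  :: (fun _ => -1, m, 2%nat)
  :: (fun z => -(dlame z * falling m 1), (m - 1)%nat, 2%nat)
  :: (fun z => -(sg * curvature' z * falling m 1), (m - 1)%nat, 1%nat)
  :: (fun z => sg * curvature z, S m, 0%nat)
  :: (fun z => 2 * sg * curvature z * dlame z * falling m 1, S (m - 1), 0%nat)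
  :: (fun z => sg * curvature z * dlame z ^ 2 * falling m 2, S (m - 2), 0%nat) :: nil.

Ltac solve_smooth :=
  match goal with
  | |- smooth (fun _ => ?a) => exact (smooth_const a)
  | |- smooth (fun z => dlame z) =>
      apply (smooth_mult (fun _ => - sg) curvature); [apply smooth_const | exact smooth_curvature]
  | |- smooth (fun z => curvature z) => exact smooth_curvature
  | |- smooth (fun z => curvature' z) => exact smooth_curvature'
  | |- smooth (fun z => @?A z ^ ?n) => apply (smooth_pow A n); solve_smooth
  | |- smooth (fun z => - @?A z) => apply (smooth_opp A); solve_smooth
  | |- smooth (fun z => @?A z * @?B z) => apply (smooth_mult A B); solve_smooth
  end.

Lemma recursion_comb_ok (m : nat) :
  List.Forall (fun t => smooth (fst (fst t)) /\ (snd (fst t) <= S m)%nat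
                        /\ (snd t + snd (fst t) <= S (S m))%nat) (recursion_comb m).
Proof.
  unfold recursion_comb.
  repeat (apply Forall_cons; [simpl; split; [solve_smooth | split; lia]|]). apply Forall_nil.
Qed.

Lemma trace_dn_recursion (m : nat) (f : pt -> R) : alpha <> 0 -> admissible f ->
  locally s (fun x => trace_dn f (S (S m)) x = eval_trace_comb f (recursion_comb m) x).
Proof.
  intros Halpha [O [HO [Hf Hadm]]]. apply filter_imp with (2 := Hadm).
  intros x [Hx [d [Hd Hpde]]].
  pose proof (normal_derivative_recursion O f HO Hf alpha k x m d Hx Hd Hpde) as Z.
  cbv zeta in Z. apply (Rmult_eq_reg_l alpha); auto. apply Rminus_diag_uniq.
  rewrite <- Z. unfold eval_trace_comb, recursion_comb, dlame. cbn [fold_right Derive_n].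
  destruct m as [|[|[|m]]]; cbn [Nat.sub falling pred] in *; rewrite ?Nat.sub_0_r in *;
    change (INR 0) with 0 in *; field; auto.
Qed.

Lemma representable_trace_dn (n m : nat) : alpha <> 0 -> (m <= n)%nat ->
  forall i, representable (i + m) (fun f x => Derive_n (trace_dn f m) i x).
Proof.
  intros Halpha. revert m. induction n as [|n IH]; intros m Hm i.
  - replace m with 0%nat by lia. rewrite Nat.add_0_r. apply (representable_trace false i).
  - destruct (Nat.eq_dec m (S n)) as [->|Hne]; [|apply IH; lia].
    destruct n as [|m0].
    + eapply representable_mono; [|apply (representable_trace true i)]. lia.
    + assert (R0 : representable (S (S m0)) (fun f x => trace_dn f (S (S m0)) x)).
      { eapply representable_ext.
        - apply (representable_eval_trace_comb _ (S m0) (recursion_comb m0)).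
          + apply recursion_comb_ok.
          + intros m' Hm' i'. apply IH. lia.
        - intros f Hf. now apply trace_dn_recursion. }
      apply (representable_Derive_n _ _ R0 i).
Qed.

Definition comb_coef (l : comb) (b0 : bool) (j : nat) (x : R) : R :=
  fold_right (fun (t : comb_term) acc => let '(c, b, j') := t in
    (if andb (Bool.eqb b b0) (Nat.eqb j' j) then c x else 0) + acc) 0 l.

Lemma eval_comb_sum_n (f : pt -> R) (N : nat) (l : comb) (x : R) : comb_ok N l ->
  eval_comb f l x = sum_n (fun j => comb_coef l false j x * Derive_n (trace_dn f 0) j x
                                   + comb_coef l true j x * Derive_n (trace_dn f 1) j x) N.
Proof.
  intros Hl. induction Hl as [|[[c b] j0] l [Hc Hj] Hl IH]; simpl in *.
  - symmetry. rewrite (sum_n_ext _ (fun _ => 0)); [apply sum_n_zero_R|].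
    intros j. change (0 * Derive_n (trace_dn f 0) j x + 0 * Derive_n (trace_dn f 1) j x = 0). ring.
  - set (T := trace_dn f (if b then 1%nat else 0%nat)).
    set (Kr := fun j => if Nat.eqb j0 j then c x * Derive_n T j x else 0).
    set (G := fun j => comb_coef l false j x * Derive_n (trace_dn f 0) j x
                       + comb_coef l true j x * Derive_n (trace_dn f 1) j x).
    rewrite IH. symmetry. rewrite (sum_n_ext _ (fun j => Kr j + G j)).
    + rewrite (sum_n_Rplus Kr G). unfold Kr. now rewrite sum_n_Kronecker.
    + intros j. unfold Kr, G, T. match goal with |- ?u = ?v => change (@eq R u v) end.
      destruct b, (Nat.eqb j0 j); simpl; ring.
Qed.

End Representability.

End NormalCoordinates.

(** * Geometry of the boundary curve *)

Lemma dist2_triangle (p q r : pt) : dist2 p r <= dist2 p q + dist2 q r.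
Proof.
  unfold dist2, nrm; cbn [fst snd].
  set (a := fst p - fst q). set (b := snd p - snd q).
  set (c := fst q - fst r). set (d := snd q - snd r).
  replace (fst p - fst r) with (a + c) by (unfold a, c; ring).
  replace (snd p - snd r) with (b + d) by (unfold b, d; ring).
  clearbody a b c d.
  assert (H1 := sqrt_pos (a ^ 2 + b ^ 2)). assert (H2 := sqrt_pos (c ^ 2 + d ^ 2)).
  rewrite <- (sqrt_pow2 (sqrt (a ^ 2 + b ^ 2) + sqrt (c ^ 2 + d ^ 2))) by lra.
  apply sqrt_le_1_alt.
  assert (E1 : sqrt (a ^ 2 + b ^ 2) ^ 2 = a ^ 2 + b ^ 2) by (apply pow2_sqrt; nra).
  assert (E2 : sqrt (c ^ 2 + d ^ 2) ^ 2 = c ^ 2 + d ^ 2) by (apply pow2_sqrt; nra).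
  assert (CS : a * c + b * d <= sqrt (a ^ 2 + b ^ 2) * sqrt (c ^ 2 + d ^ 2)).
  { rewrite <- sqrt_mult by nra.
    destruct (Rle_dec (a * c + b * d) 0).
    - pose proof (sqrt_pos ((a ^ 2 + b ^ 2) * (c ^ 2 + d ^ 2))). lra.
    - rewrite <- (sqrt_pow2 (a * c + b * d)) by lra. apply sqrt_le_1_alt.
      assert (0 <= (a * d - b * c) ^ 2) by apply pow2_ge_0. nra. }
  nra.
Qed.

Lemma closure2_of (D : pt -> Prop) (p : pt) : D p -> closure2 D p.
Proof.
  intros Hp eps He. exists p. split; auto. unfold dist2, nrm; cbn [fst snd].
  replace ((fst p - fst p) ^ 2 + (snd p - snd p) ^ 2) with 0 by ring. rewrite sqrt_0. lra.
Qed.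

Lemma Dex_not_D (D : pt -> Prop) (q : pt) : D q -> Dex D q -> False.
Proof. intros H1 H2. now apply H2, closure2_of. Qed.

Lemma D_or_Dex (D : pt -> Prop) (q : pt) : ~ bdry D q -> D q \/ Dex D q.
Proof.
  intros H. destruct (classic (D q)) as [?|Hn]; auto. right. intros Hc. now apply H.
Qed.

Lemma open2_Dex (D : pt -> Prop) : open2 (Dex D).
Proof.
  intros p Hp. unfold Dex, closure2 in Hp.
  apply not_all_ex_not in Hp. destruct Hp as [e He].
  apply imply_to_and in He. destruct He as [He Hn].
  exists (e / 2). split; [lra|]. intros q Hq Hcq.
  destruct (Hcq (e / 2)) as [z [Hz Hdz]]; [lra|].
  apply Hn. exists z. split; auto. pose proof (dist2_triangle p q z). lra.
Qed.

(* Two disjoint open sets covering a continuous path on [0, 1] cannot both meet it: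
   the supremum of the initial stretch lying in [A] would otherwise be a cut point. *)
Lemma path_stays_in_open (A B : pt -> Prop) (P : R -> pt) : open A -> open B ->
  (forall q, A q -> B q -> False) ->
  (forall l, 0 <= l <= 1 -> continuous P l) ->
  (forall l, 0 <= l <= 1 -> A (P l) \/ B (P l)) ->
  A (P 0) -> A (P 1).
Proof.
  intros HA HB Hdis Hc Hcov H0.
  assert (Hopen : forall (X : pt -> Prop) c, open X -> 0 <= c <= 1 -> X (P c) ->
            exists d, 0 < d /\ forall mu, Rabs (mu - c) < d -> X (P mu)).
  { intros X c HX Hc01 HXc. destruct (Hc c Hc01 _ (HX _ HXc)) as [d Hd].
    exists d. split; [apply cond_pos | exact Hd]. }
  set (S := fun l => 0 <= l <= 1 /\ forall mu, 0 <= mu <= l -> A (P mu)).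
  assert (HS0 : S 0) by (split; [lra | intros mu Hmu; replace mu with 0 by lra; auto]).
  destruct (completeness S) as [c [Hub Hlub]].
  { exists 1. intros l [Hl _]. lra. }
  { now exists 0. }
  assert (Hc0 : 0 <= c) by now apply Hub.
  assert (Hc1 : c <= 1) by (apply Hlub; intros l [Hl _]; lra).
  assert (Hbelow : forall mu, 0 <= mu < c -> A (P mu)).
  { intros mu Hmu. destruct (classic (exists l, S l /\ mu <= l)) as [[l [[_ Hl2] Hml]]|Hn].
    - apply Hl2. lra.
    - exfalso. assert (c <= mu); [|lra]. apply Hlub. intros l Hl.
      destruct (Rle_dec l mu); auto. exfalso. apply Hn. exists l. split; auto. lra. }
  assert (HAc : A (P c)).
  { destruct (Hcov c (conj Hc0 Hc1)) as [?|HBc]; auto. exfalso.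
    destruct (Hopen B c HB (conj Hc0 Hc1) HBc) as [d [Hd HBd]].
    destruct (Req_dec c 0) as [E|NE].
    - apply (Hdis (P c)); auto. now rewrite E.
    - set (mu := Rmax 0 (c - d / 2)).
      assert (Hmu : 0 <= mu < c) by (unfold mu; split; [apply Rmax_l | apply Rmax_lub_lt; lra]).
      apply (Hdis (P mu)); [now apply Hbelow|]. apply HBd.
      unfold mu, Rmax. destruct (Rle_dec 0 (c - d / 2)); rewrite Rabs_left1; lra. }
  destruct (Req_dec c 1) as [E1|NE1]; [now rewrite <- E1|].
  exfalso. destruct (Hopen A c HA (conj Hc0 Hc1) HAc) as [d [Hd HAd]].
  set (l := Rmin 1 (c + d / 2)).
  assert (Hl : c < l) by (unfold l; apply Rmin_glb_lt; lra).
  assert (S l).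
  { split; [split; [lra | unfold l; apply Rmin_l]|].
    intros mu Hmu. destruct (Rlt_dec mu c); [apply Hbelow; lra|].
    apply HAd. assert (l <= c + d / 2) by (unfold l; apply Rmin_r). rewrite Rabs_right; lra. }
  assert (l <= c) by now apply Hub. lra.
Qed.

Lemma Rabs_between (a b c s r : R) : Rabs (a - s) < r -> Rabs (b - s) < r ->
  Rmin a b <= c <= Rmax a b -> Rabs (c - s) < r.
Proof.
  intros Ha Hb Hc. apply Rabs_def2 in Ha. apply Rabs_def2 in Hb.
  unfold Rmin, Rmax in Hc. apply Rabs_def1; destruct (Rle_dec a b); lra.
Qed.

Lemma Rabs_le_between (x b : R) : Rabs x <= b -> - b <= x <= b.
Proof. intros H. unfold Rabs in H. destruct (Rcase_abs x); split; lra. Qed.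

Lemma Rabs_mult_le (a b B1 B2 : R) : Rabs a <= B1 -> Rabs b <= B2 -> Rabs (a * b) <= B1 * B2.
Proof.
  intros H1 H2. rewrite Rabs_mult. pose proof (Rabs_pos a). pose proof (Rabs_pos b).
  apply Rmult_le_compat; auto.
Qed.

Lemma Rabs_sign (sg : R) : sg = 1 \/ sg = -1 -> Rabs sg = 1.
Proof. intros [-> | ->]; unfold Rabs; destruct (Rcase_abs _); lra. Qed.

Lemma dot_unit_perturb (x y z w : R) : x ^ 2 + y ^ 2 = 1 ->
  Rabs (z - x) <= 1 / 4 -> Rabs (w - y) <= 1 / 4 -> z * x + w * y >= 1 / 2.
Proof.
  intros H1 H2 H3.
  assert (Hx : Rabs x <= 1) by (apply Rabs_le; nra).
  assert (Hy : Rabs y <= 1) by (apply Rabs_le; nra).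
  assert (A := Rabs_le_between _ _ (Rabs_mult_le _ _ _ _ H2 Hx)).
  assert (B := Rabs_le_between _ _ (Rabs_mult_le _ _ _ _ H3 Hy)).
  nra.
Qed.

Section Boundary.
Variables (D : pt -> Prop) (L : R) (gam nv : R -> pt).
Hypotheses (Harc : arclength_param D L gam) (Hout : outward_normal D gam nv).

Definition gam1 (t : R) : R := fst (gam t).
Definition gam2 (t : R) : R := snd (gam t).
Definition tan1 (t : R) : R := Derive gam1 t.
Definition tan2 (t : R) : R := Derive gam2 t.

Lemma L_pos : 0 < L.
Proof. apply Harc. Qed.

Lemma smooth_gam1 : smooth gam1.
Proof. destruct Harc as [_ [H _]]. intros n x. exact (H (S n) x). Qed.

Lemma smooth_gam2 : smooth gam2.
Proof. destruct Harc as [_ [_ [H _]]]. intros n x. exact (H (S n) x). Qed.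

Lemma smooth_tan1 : smooth tan1.
Proof. exact (smooth_Derive _ smooth_gam1). Qed.

Lemma smooth_tan2 : smooth tan2.
Proof. exact (smooth_Derive _ smooth_gam2). Qed.

Lemma unit_tangent (t : R) : tan1 t ^ 2 + tan2 t ^ 2 = 1.
Proof. destruct Harc as [_ [_ [_ [_ [H _]]]]]. apply H. Qed.

Lemma Rabs_tan1_le (t : R) : Rabs (tan1 t) <= 1.
Proof. pose proof (unit_tangent t). apply Rabs_le. nra. Qed.

Lemma Rabs_tan2_le (t : R) : Rabs (tan2 t) <= 1.
Proof. pose proof (unit_tangent t). apply Rabs_le. nra. Qed.

Lemma gam_periodic (n : Z) (t : R) : gam (t + IZR n * L) = gam t.
Proof.
  destruct Harc as [_ [_ [_ [Hp _]]]].
  assert (Hnat : forall (k : nat) t, gam (t + INR k * L) = gam t /\ gam (t - INR k * L) = gam t).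
  { induction k as [|k IH]; intros u; [simpl; split; f_equal; ring|].
    rewrite S_INR. split.
    - replace (u + (INR k + 1) * L) with ((u + INR k * L) + L) by ring. rewrite Hp. apply IH.
    - rewrite <- (Hp (u - (INR k + 1) * L)).
      replace (u - (INR k + 1) * L + L) with (u - INR k * L) by ring. apply IH. }
  destruct (Z.le_gt_cases 0 n).
  - rewrite <- (Z2Nat.id n), <- INR_IZR_INZ by lia. apply Hnat.
  - replace (IZR n) with (- INR (Z.to_nat (- n))).
    + replace (t + - INR (Z.to_nat (- n)) * L) with (t - INR (Z.to_nat (- n)) * L) by ring.
      apply Hnat.
    + rewrite INR_IZR_INZ, Z2Nat.id by lia. rewrite opp_IZR. ring.
Qed.

Lemma shift_into_period (x a : R) : exists n : Z, a <= x + IZR n * L < a + L.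
Proof.
  pose proof L_pos as HL.
  destruct (base_Int_part ((x - a) / L)) as [H1 H2].
  exists (- Int_part ((x - a) / L))%Z. rewrite opp_IZR.
  set (k := IZR (Int_part ((x - a) / L))) in *.
  assert (E : (x - a) / L * L = x - a) by (field; lra).
  split.
  - assert (k * L <= (x - a) / L * L) by (apply Rmult_le_compat_r; lra). lra.
  - assert ((x - a) / L * L < (k + 1) * L) by (apply Rmult_lt_compat_r; lra). lra.
Qed.

Lemma bdry_gam (t : R) : bdry D (gam t).
Proof.
  destruct Harc as [_ [_ [_ [_ [_ [_ Hb]]]]]]. apply Hb.
  destruct (shift_into_period t 0) as [n Hn].
  exists (t + IZR n * L). split; [lra | symmetry; apply gam_periodic].
Qed.

Lemma gam_eq_period (t t' : R) : gam t = gam t' -> exists n : Z, t' = t + IZR n * L.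
Proof.
  intros E. destruct Harc as [_ [_ [_ [_ [_ [Hi _]]]]]].
  destruct (shift_into_period t 0) as [n0 Hn0]. destruct (shift_into_period t' 0) as [n1 Hn1].
  assert (Q : t + IZR n0 * L = t' + IZR n1 * L).
  { apply Hi; try lra. now rewrite !gam_periodic. }
  exists (n0 - n1)%Z. rewrite minus_IZR. lra.
Qed.

Lemma outward_normal_sign (t : R) :
  exists sg, (sg = 1 \/ sg = -1) /\ nv t = (sg * - tan2 t, sg * tan1 t).
Proof.
  destruct (Hout t) as [Hn [Hd _]].
  destruct (nv t) as [n1 n2] eqn:En. unfold nrm, dot, tangent in *. cbn [fst snd] in *.
  change (Derive (fun t0 : R => fst (gam t0)) t) with (tan1 t) in Hd.
  change (Derive (fun t0 : R => snd (gam t0)) t) with (tan2 t) in Hd.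
  assert (Hu := unit_tangent t).
  assert (Hn2 : n1 ^ 2 + n2 ^ 2 = 1).
  { rewrite <- (sqrt_def (n1 ^ 2 + n2 ^ 2)) by nra. rewrite Hn. ring. }
  set (sg := - n1 * tan2 t + n2 * tan1 t). exists sg.
  assert (S2 : sg ^ 2 = 1).
  { unfold sg. replace ((- n1 * tan2 t + n2 * tan1 t) ^ 2) with
      ((n1 ^ 2 + n2 ^ 2) * (tan1 t ^ 2 + tan2 t ^ 2) - (n1 * tan1 t + n2 * tan2 t) ^ 2) by ring.
    rewrite Hn2, Hu, Hd. ring. }
  split.
  - assert (Z : (sg - 1) * (sg + 1) = 0) by nra.
    apply Rmult_integral in Z. destruct Z; [left | right]; lra.
  - f_equal; unfold sg.
    + transitivity ((n1 * tan1 t + n2 * tan2 t) * tan1 t + (- n1 * tan2 t + n2 * tan1 t) * - tan2 t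
                    + n1 * (1 - (tan1 t ^ 2 + tan2 t ^ 2))); [ring|]. rewrite Hd, Hu. ring.
    + transitivity ((n1 * tan1 t + n2 * tan2 t) * tan2 t + (- n1 * tan2 t + n2 * tan1 t) * tan1 t
                    + n2 * (1 - (tan1 t ^ 2 + tan2 t ^ 2))); [ring|]. rewrite Hd, Hu. ring.
Qed.

Lemma gam_lipschitz (a b : R) :
  Rabs (gam1 b - gam1 a) <= Rabs (b - a) /\ Rabs (gam2 b - gam2 a) <= Rabs (b - a).
Proof.
  split.
  - destruct (smooth_MVT gam1 a b smooth_gam1) as [c [_ E]]. rewrite E, Rabs_mult.
    pose proof (Rabs_tan1_le c). pose proof (Rabs_pos (b - a)). unfold tan1 in *. nra.
  - destruct (smooth_MVT gam2 a b smooth_gam2) as [c [_ E]]. rewrite E, Rabs_mult.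
    pose proof (Rabs_tan2_le c). pose proof (Rabs_pos (b - a)). unfold tan2 in *. nra.
Qed.

Lemma normal_decomposition (q1 q2 z : R) :
  (q1 - gam1 z) * tan1 z + (q2 - gam2 z) * tan2 z = 0 ->
  let e := (q1 - gam1 z) * (- tan2 z) + (q2 - gam2 z) * tan1 z in
  (q1, q2) = (gam1 z + e * - tan2 z, gam2 z + e * tan1 z).
Proof.
  intros Hchi e. assert (Hu := unit_tangent z). f_equal.
  - transitivity (gam1 z + ((q1 - gam1 z) * tan1 z + (q2 - gam2 z) * tan2 z) * tan1 z + e * - tan2 z
                  + (q1 - gam1 z) * (1 - (tan1 z ^ 2 + tan2 z ^ 2))); [unfold e; ring|].
    rewrite Hchi, Hu. ring.
  - transitivity (gam2 z + ((q1 - gam1 z) * tan1 z + (q2 - gam2 z) * tan2 z) * tan2 z + e * tan1 z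
                  + (q2 - gam2 z) * (1 - (tan1 z ^ 2 + tan2 z ^ 2))); [unfold e; ring|].
    rewrite Hchi, Hu. ring.
Qed.

Definition offset (sg t e : R) : pt := (gam1 t + e * (sg * - tan2 t), gam2 t + e * (sg * tan1 t)).

Lemma is_derive_gam_dot (a b : R) (t : R) :
  is_derive (fun v => gam1 v * a + gam2 v * b) t (tan1 t * a + tan2 t * b).
Proof.
  apply is_derive_eq_val with (tan1 t * a + gam1 t * 0 + (tan2 t * b + gam2 t * 0)); [|ring].
  apply is_derive_Rplus; apply (is_derive_Rmult _ (fun _ => _)); try apply is_derive_Rconst;
    apply Derive_correct, smooth_ex_derive; [apply smooth_gam1 | apply smooth_gam2].
Qed.

Lemma smooth_gam_dot (a b : R) : smooth (fun v => gam1 v * a + gam2 v * b).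
Proof.
  apply smooth_plus; apply smooth_mult; auto using smooth_gam1, smooth_gam2, smooth_const.
Qed.

Lemma outward_offset (t sg eps : R) : 0 < eps -> nv t = (sg * - tan2 t, sg * tan1 t) ->
  exists e, 0 < e < eps /\ Dex D (offset sg t e).
Proof.
  intros Heps Ent. destruct (Hout t) as [_ [_ [del [Hdel Hdex]]]].
  set (e := Rmin del eps / 2).
  pose proof (Rmin_l del eps). pose proof (Rmin_r del eps). pose proof (Rmin_pos del eps Hdel Heps).
  exists e. split; [unfold e; lra|].
  specialize (Hdex e ltac:(unfold e; lra)). unfold pmove in Hdex. rewrite Ent in Hdex. exact Hdex.
Qed.

(* Near a parameter [s] where the tangent varies by less than [1/8], the curve is a
   graph over its tangent line: chords are almost tangent and almost orthogonal to
   the normal. *)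
Section NearParameter.
Variables s r1 : R.
Hypothesis Hr1 : 0 < r1.
Hypothesis Htan1 : forall u, Rabs (u - s) < r1 -> Rabs (tan1 u - tan1 s) < 1 / 8.
Hypothesis Htan2 : forall u, Rabs (u - s) < r1 -> Rabs (tan2 u - tan2 s) < 1 / 8.

Lemma tan_close (u v : R) : Rabs (u - s) < r1 -> Rabs (v - s) < r1 ->
  Rabs (tan1 u - tan1 v) <= 1 / 4 /\ Rabs (tan2 u - tan2 v) <= 1 / 4.
Proof.
  intros Hu Hv. split.
  - replace (tan1 u - tan1 v) with ((tan1 u - tan1 s) - (tan1 v - tan1 s)) by ring.
    eapply Rle_trans; [apply Rabs_triang|]. rewrite Rabs_Ropp.
    pose proof (Htan1 u Hu). pose proof (Htan1 v Hv). lra.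
  - replace (tan2 u - tan2 v) with ((tan2 u - tan2 s) - (tan2 v - tan2 s)) by ring.
    eapply Rle_trans; [apply Rabs_triang|]. rewrite Rabs_Ropp.
    pose proof (Htan2 u Hu). pose proof (Htan2 v Hv). lra.
Qed.

Lemma chord_tangent_lower (t t' u : R) :
  Rabs (t - s) < r1 -> Rabs (t' - s) < r1 -> Rabs (u - s) < r1 -> t <= t' ->
  (gam1 t' - gam1 t) * tan1 u + (gam2 t' - gam2 t) * tan2 u >= (t' - t) / 2.
Proof.
  intros Ht Ht' Hu Htt.
  destruct (smooth_MVT _ t t' (smooth_gam_dot (tan1 u) (tan2 u))) as [c [Hc E]].
  rewrite (is_derive_unique _ _ _ (is_derive_gam_dot _ _ c)) in E.
  assert (Hcs : Rabs (c - s) < r1) by (eapply Rabs_between; [exact Ht | exact Ht' | exact Hc]).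
  destruct (tan_close c u Hcs Hu) as [B1 B2].
  assert (Lb := dot_unit_perturb _ _ _ _ (unit_tangent u) B1 B2).
  replace ((gam1 t' - gam1 t) * tan1 u + (gam2 t' - gam2 t) * tan2 u)
    with (gam1 t' * tan1 u + gam2 t' * tan2 u - (gam1 t * tan1 u + gam2 t * tan2 u)) by ring.
  rewrite E. nra.
Qed.

Lemma Rabs_chord_tangent_lower (t t' u : R) :
  Rabs (t - s) < r1 -> Rabs (t' - s) < r1 -> Rabs (u - s) < r1 ->
  Rabs ((gam1 t' - gam1 t) * tan1 u + (gam2 t' - gam2 t) * tan2 u) >= Rabs (t' - t) / 2.
Proof.
  intros Ht Ht' Hu. destruct (Rle_dec t t') as [Hle|Hgt].
  - pose proof (chord_tangent_lower t t' u Ht Ht' Hu Hle). rewrite !Rabs_right; lra.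
  - pose proof (chord_tangent_lower t' t u Ht' Ht Hu ltac:(lra)).
    rewrite Rabs_left1 by lra. rewrite Rabs_left1; lra.
Qed.

Lemma chord_normal_upper (t t' : R) : Rabs (t - s) < r1 -> Rabs (t' - s) < r1 ->
  Rabs ((gam1 t' - gam1 t) * (- tan2 t) + (gam2 t' - gam2 t) * tan1 t) <= Rabs (t' - t) / 2.
Proof.
  intros Ht Ht'.
  destruct (smooth_MVT _ t t' (smooth_gam_dot (- tan2 t) (tan1 t))) as [c [Hc E]].
  rewrite (is_derive_unique _ _ _ (is_derive_gam_dot _ _ c)) in E.
  assert (Hcs : Rabs (c - s) < r1) by (eapply Rabs_between; [exact Ht | exact Ht' | exact Hc]).
  destruct (tan_close c t Hcs Ht) as [B1 B2].
  replace ((gam1 t' - gam1 t) * (- tan2 t) + (gam2 t' - gam2 t) * tan1 t)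
    with (gam1 t' * (- tan2 t) + gam2 t' * tan1 t - (gam1 t * (- tan2 t) + gam2 t * tan1 t))
    by ring.
  rewrite E, Rabs_mult.
  replace (tan1 c * - tan2 t + tan2 c * tan1 t)
    with (- ((tan1 c - tan1 t) * tan2 t) + (tan2 c - tan2 t) * tan1 t) by ring.
  assert (A1 : Rabs (- ((tan1 c - tan1 t) * tan2 t) + (tan2 c - tan2 t) * tan1 t) <= 1 / 2).
  { eapply Rle_trans; [apply Rabs_triang|]. rewrite Rabs_Ropp.
    pose proof (Rabs_mult_le _ _ _ _ B1 (Rabs_tan2_le t)).
    pose proof (Rabs_mult_le _ _ _ _ B2 (Rabs_tan1_le t)). lra. }
  pose proof (Rabs_pos (t' - t)). nra.
Qed.

(* A normal segment from [gam t] can only return to the curve near [s] at [e = 0]: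
   its displacement would be almost normal and almost tangent at once. *)
Lemma offset_locally_injective (sg t t' e : R) : sg = 1 \/ sg = -1 ->
  Rabs (t - s) < r1 -> Rabs (t' - s) < r1 -> offset sg t e = gam t' -> e = 0.
Proof.
  intros Hsg Ht Ht' EP.
  assert (Ex : gam1 t' = gam1 t + e * (sg * - tan2 t)) by (unfold gam1; rewrite <- EP; reflexivity).
  assert (Ey : gam2 t' = gam2 t + e * (sg * tan1 t)) by (unfold gam2; rewrite <- EP; reflexivity).
  assert (Hu := unit_tangent t).
  assert (A : (gam1 t' - gam1 t) * (- tan2 t) + (gam2 t' - gam2 t) * tan1 t = e * sg).
  { rewrite Ex, Ey. transitivity (e * sg * (tan1 t ^ 2 + tan2 t ^ 2)); [ring|]. rewrite Hu. ring. }
  assert (B : (gam1 t' - gam1 t) * tan1 s + (gam2 t' - gam2 t) * tan2 s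
              = e * sg * (- ((tan2 t - tan2 s) * tan1 s) + (tan1 t - tan1 s) * tan2 s)).
  { rewrite Ex, Ey. ring. }
  pose proof (chord_normal_upper t t' Ht Ht') as HA. rewrite A in HA.
  assert (Hss : Rabs (s - s) < r1) by (rewrite Rminus_diag, Rabs_R0; auto).
  pose proof (Rabs_chord_tangent_lower t t' s Ht Ht' Hss) as HB. rewrite B in HB.
  rewrite Rabs_mult, (Rabs_mult e sg), (Rabs_sign sg Hsg) in HB.
  rewrite Rabs_mult, (Rabs_sign sg Hsg) in HA.
  assert (Q : Rabs (- ((tan2 t - tan2 s) * tan1 s) + (tan1 t - tan1 s) * tan2 s) <= 1 / 4).
  { eapply Rle_trans; [apply Rabs_triang|]. rewrite Rabs_Ropp.
    pose proof (Rabs_mult_le _ _ _ _ (Rlt_le _ _ (Htan2 t Ht)) (Rabs_tan1_le s)).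
    pose proof (Rabs_mult_le _ _ _ _ (Rlt_le _ _ (Htan1 t Ht)) (Rabs_tan2_le s)). lra. }
  pose proof (Rabs_pos e). pose proof (Rabs_pos (t' - t)).
  pose proof (Rabs_pos (- ((tan2 t - tan2 s) * tan1 s) + (tan1 t - tan1 s) * tan2 s)).
  assert (Z : Rabs e = 0) by nra. now apply Rabs_eq_0 in Z.
Qed.

Variable m : R.
Hypothesis Hm : 0 < m.
Hypothesis Hfar : forall c, s + r1 / 2 <= c <= s + L - r1 / 2 ->
  m <= (gam1 c - gam1 s) ^ 2 + (gam2 c - gam2 s) ^ 2.

Let cp := Rmin (Rmin 1 (m / 16)) (r1 / 2).

Let cp_pos : 0 < cp.
Proof. unfold cp. repeat apply Rmin_pos; lra. Qed.

Let cp_le_m : cp <= m / 16.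
Proof. unfold cp. eapply Rle_trans; [apply Rmin_l | apply Rmin_r]. Qed.

Let cp_le_r1 : cp <= r1 / 2.
Proof. unfold cp. apply Rmin_r. Qed.

(* Such an offset point lies within [5 cp / 4] of [gam s], so it could only be
   [gam t'] for a parameter [t'] near [s] (excluded by local injectivity) or far
   from [s] (excluded by [Hfar], as [cp <= m / 16]). *)
Lemma offset_not_bdry (sg t e : R) : sg = 1 \/ sg = -1 ->
  Rabs (t - s) <= cp / 4 -> 0 < e < cp -> ~ bdry D (offset sg t e).
Proof.
  intros Hsg Ht He Hb.
  destruct Harc as [_ [_ [_ [_ [_ [_ Hbd]]]]]].
  apply Hbd in Hb. destruct Hb as [t' [_ EP]].
  destruct (shift_into_period t' (s - r1 / 2)) as [n Hn].
  set (t'' := t' + IZR n * L) in *.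
  assert (EP' : offset sg t e = gam t'') by (unfold t''; now rewrite gam_periodic).
  destruct (Rlt_dec t'' (s + r1 / 2)) as [Hnear|Hfar'].
  - assert (N1 : Rabs (t'' - s) < r1) by (apply Rabs_def1; lra).
    assert (N2 : Rabs (t - s) < r1) by lra.
    assert (e = 0) by exact (offset_locally_injective sg t t'' e Hsg N2 N1 EP'). lra.
  - assert (Hq := Hfar t'' ltac:(lra)).
    assert (Ex : gam1 t'' = gam1 t + e * (sg * - tan2 t)) by (unfold gam1; rewrite <- EP'; reflexivity).
    assert (Ey : gam2 t'' = gam2 t + e * (sg * tan1 t)) by (unfold gam2; rewrite <- EP'; reflexivity).
    rewrite Ex, Ey in Hq.
    destruct (gam_lipschitz s t) as [L1 L2].
    assert (Hsa := Rabs_sign sg Hsg).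
    assert (B1 : Rabs (gam1 t + e * (sg * - tan2 t) - gam1 s) <= cp / 4 + cp).
    { replace (gam1 t + e * (sg * - tan2 t) - gam1 s) with ((gam1 t - gam1 s) + e * (sg * - tan2 t))
        by ring.
      eapply Rle_trans; [apply Rabs_triang|]. rewrite !Rabs_mult, Rabs_Ropp, Hsa.
      pose proof (Rabs_tan2_le t). rewrite (Rabs_right e) by lra.
      assert (e * (1 * Rabs (tan2 t)) <= e) by nra. lra. }
    assert (B2 : Rabs (gam2 t + e * (sg * tan1 t) - gam2 s) <= cp / 4 + cp).
    { replace (gam2 t + e * (sg * tan1 t) - gam2 s) with ((gam2 t - gam2 s) + e * (sg * tan1 t))
        by ring.
      eapply Rle_trans; [apply Rabs_triang|]. rewrite !Rabs_mult, Hsa.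
      pose proof (Rabs_tan1_le t). rewrite (Rabs_right e) by lra.
      assert (e * (1 * Rabs (tan1 t)) <= e) by nra. lra. }
    assert (Sq1 : (gam1 t + e * (sg * - tan2 t) - gam1 s) ^ 2 <= (cp / 4 + cp) ^ 2).
    { rewrite <- pow2_abs. pose proof (Rabs_pos (gam1 t + e * (sg * - tan2 t) - gam1 s)). nra. }
    assert (Sq2 : (gam2 t + e * (sg * tan1 t) - gam2 s) ^ 2 <= (cp / 4 + cp) ^ 2).
    { rewrite <- pow2_abs. pose proof (Rabs_pos (gam2 t + e * (sg * tan1 t) - gam2 s)). nra. }
    assert (cp <= 1) by (unfold cp; eapply Rle_trans; apply Rmin_l).
    nra.
Qed.

Lemma continuous_offset_path (sg ta ea tb eb l : R) :
  continuous (fun l => offset sg (ta + l * (tb - ta)) (ea + l * (eb - ea))) l.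
Proof.
  assert (CT : continuous (fun l => ta + l * (tb - ta)) l).
  { apply (continuous_plus (fun _ => ta) (fun l => l * (tb - ta))); [apply continuous_const|].
    apply (continuous_mult (fun l => l) (fun _ => tb - ta));
      [apply continuous_id | apply continuous_const]. }
  assert (CE : continuous (fun l => ea + l * (eb - ea)) l).
  { apply (continuous_plus (fun _ => ea) (fun l => l * (eb - ea))); [apply continuous_const|].
    apply (continuous_mult (fun l => l) (fun _ => eb - ea));
      [apply continuous_id | apply continuous_const]. }
  assert (Cg : forall g : R -> R, smooth g -> continuous (fun l => g (ta + l * (tb - ta))) l).
  { intros g Hg. apply (continuous_comp (fun l => ta + l * (tb - ta)) g); auto.
    now apply smooth_continuous. }
  unfold offset. apply filterlim_locally_pair; [apply locally_filter| |].
  - apply (continuous_plus (fun l => gam1 (ta + l * (tb - ta)))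
      (fun l => (ea + l * (eb - ea)) * (sg * - tan2 (ta + l * (tb - ta))))).
    + apply Cg, smooth_gam1.
    + apply (continuous_mult (fun l => ea + l * (eb - ea))
        (fun l => sg * - tan2 (ta + l * (tb - ta)))); [exact CE|].
      apply (continuous_mult (fun _ => sg)); [apply continuous_const|].
      apply (continuous_comp (fun l => tan2 (ta + l * (tb - ta))) (fun x => - x)).
      * apply Cg, smooth_tan2.
      * apply (continuous_opp (fun x : R => x)), continuous_id.
  - apply (continuous_plus (fun l => gam2 (ta + l * (tb - ta)))
      (fun l => (ea + l * (eb - ea)) * (sg * tan1 (ta + l * (tb - ta))))).
    + apply Cg, smooth_gam2.
    + apply (continuous_mult (fun l => ea + l * (eb - ea))
        (fun l => sg * tan1 (ta + l * (tb - ta)))); [exact CE|].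
      apply (continuous_mult (fun _ => sg)); [apply continuous_const | apply Cg, smooth_tan1].
Qed.

Lemma offset_same_side (A B : pt -> Prop) (sg ta ea tb eb : R) :
  open A -> open B -> (forall z, A z -> B z -> False) ->
  (forall z, ~ bdry D z -> A z \/ B z) -> sg = 1 \/ sg = -1 ->
  Rabs (ta - s) <= cp / 4 -> 0 < ea < cp -> Rabs (tb - s) <= cp / 4 -> 0 < eb < cp ->
  A (offset sg ta ea) -> A (offset sg tb eb).
Proof.
  intros HA HB Hdis Hcov Hsg Hta Hea Htb Heb H0.
  set (P := fun l => offset sg (ta + l * (tb - ta)) (ea + l * (eb - ea))).
  replace (offset sg tb eb) with (P 1) by (unfold P; f_equal; ring).
  apply (path_stays_in_open A B P HA HB Hdis).
  - intros l _. apply continuous_offset_path.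
  - intros l Hl. apply Hcov, offset_not_bdry; auto.
    + replace (ta + l * (tb - ta) - s) with ((1 - l) * (ta - s) + l * (tb - s)) by ring.
      eapply Rle_trans; [apply Rabs_triang|]. rewrite !Rabs_mult.
      rewrite (Rabs_right (1 - l)), (Rabs_right l) by lra. nra.
    + destruct (Rle_dec ea eb).
      * assert (0 <= l * (eb - ea) <= eb - ea) by nra. lra.
      * assert (eb - ea <= l * (eb - ea) <= 0) by nra. lra.
  - unfold P. replace (ta + 0 * (tb - ta)) with ta by ring.
    now replace (ea + 0 * (eb - ea)) with ea by ring.
Qed.

(* Every point [q] close to [gam s] has a foot [z] near [s], a zero of
   [t |-> (q - gam t) . tan t], found by the intermediate value theorem. *)
Lemma foot_exists (q1 q2 : R) : Rabs (q1 - gam1 s) < cp / 32 -> Rabs (q2 - gam2 s) < cp / 32 ->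
  exists z, Rabs (z - s) <= cp / 4 /\ (q1 - gam1 z) * tan1 z + (q2 - gam2 z) * tan2 z = 0.
Proof.
  intros Hq1 Hq2. set (r := cp / 4).
  assert (Hr0 : 0 < r) by (unfold r; lra).
  set (chi := fun t => (q1 - gam1 t) * tan1 t + (q2 - gam2 t) * tan2 t).
  assert (Schi : smooth chi).
  { apply smooth_plus; apply smooth_mult;
      auto using smooth_minus, smooth_const, smooth_gam1, smooth_gam2, smooth_tan1, smooth_tan2. }
  assert (Hsr1 : Rabs (s - r - s) < r1)
    by (replace (s - r - s) with (- r) by ring; rewrite Rabs_Ropp, Rabs_right; unfold r; lra).
  assert (Hsr2 : Rabs (s + r - s) < r1)
    by (replace (s + r - s) with r by ring; rewrite Rabs_right; unfold r; lra).
  assert (Hss : Rabs (s - s) < r1) by (rewrite Rminus_diag, Rabs_R0; auto).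
  assert (Bd : forall u, Rabs ((q1 - gam1 s) * tan1 u + (q2 - gam2 s) * tan2 u) <= 2 * (cp / 32)).
  { intros u. eapply Rle_trans; [apply Rabs_triang|].
    pose proof (Rabs_mult_le _ _ _ _ (Rlt_le _ _ Hq1) (Rabs_tan1_le u)).
    pose proof (Rabs_mult_le _ _ _ _ (Rlt_le _ _ Hq2) (Rabs_tan2_le u)). lra. }
  assert (C1 : chi (s - r) > 0).
  { pose proof (chord_tangent_lower (s - r) s (s - r) Hsr1 Hss Hsr1 ltac:(lra)) as X.
    pose proof (Rabs_le_between _ _ (Bd (s - r))) as Y.
    replace (chi (s - r)) with (((q1 - gam1 s) * tan1 (s - r) + (q2 - gam2 s) * tan2 (s - r))
      + ((gam1 s - gam1 (s - r)) * tan1 (s - r) + (gam2 s - gam2 (s - r)) * tan2 (s - r)))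
      by (unfold chi; ring).
    unfold r in *. lra. }
  assert (C2 : chi (s + r) < 0).
  { pose proof (chord_tangent_lower s (s + r) (s + r) Hss Hsr2 Hsr2 ltac:(lra)) as X.
    pose proof (Rabs_le_between _ _ (Bd (s + r))) as Y.
    replace (chi (s + r)) with (((q1 - gam1 s) * tan1 (s + r) + (q2 - gam2 s) * tan2 (s + r))
      - ((gam1 (s + r) - gam1 s) * tan1 (s + r) + (gam2 (s + r) - gam2 s) * tan2 (s + r)))
      by (unfold chi; ring).
    unfold r in *. lra. }
  destruct (IVT (fun t => - chi t) (s - r) (s + r)) as [z [Hz Hz0]]; try lra.
  { intros x. apply continuity_pt_filterlim. apply (smooth_continuous _ x (smooth_opp chi Schi)). }
  exists z. split; [apply Rabs_le; unfold r in *; lra | unfold chi in Hz0; lra].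
Qed.

Lemma offset_cover (q1 q2 : R) : Rabs (q1 - gam1 s) < cp / 32 -> Rabs (q2 - gam2 s) < cp / 32 ->
  exists t0 e0, Rabs (t0 - s) <= cp / 4 /\ Rabs e0 < cp /\
    (q1, q2) = (gam1 t0 + e0 * - tan2 t0, gam2 t0 + e0 * tan1 t0).
Proof.
  intros Hq1 Hq2. destruct (foot_exists q1 q2 Hq1 Hq2) as [z [Hzs Hchi]].
  set (e0 := (q1 - gam1 z) * (- tan2 z) + (q2 - gam2 z) * tan1 z).
  exists z, e0. split; [exact Hzs | split; [|now apply normal_decomposition]].
  destruct (gam_lipschitz s z) as [L1 L2].
  assert (A1 : Rabs (q1 - gam1 z) < cp / 32 + cp / 4).
  { replace (q1 - gam1 z) with ((q1 - gam1 s) - (gam1 z - gam1 s)) by ring.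
    eapply Rle_lt_trans; [apply Rabs_triang|]. rewrite Rabs_Ropp. lra. }
  assert (A2 : Rabs (q2 - gam2 z) < cp / 32 + cp / 4).
  { replace (q2 - gam2 z) with ((q2 - gam2 s) - (gam2 z - gam2 s)) by ring.
    eapply Rle_lt_trans; [apply Rabs_triang|]. rewrite Rabs_Ropp. lra. }
  unfold e0. eapply Rle_lt_trans; [apply Rabs_triang|].
  rewrite !Rabs_mult, Rabs_Ropp.
  pose proof (Rabs_tan1_le z). pose proof (Rabs_tan2_le z).
  pose proof (Rabs_pos (q1 - gam1 z)). pose proof (Rabs_pos (q2 - gam2 z)).
  assert (Rabs (q1 - gam1 z) * Rabs (tan2 z) <= Rabs (q1 - gam1 z)) by nra.
  assert (Rabs (q2 - gam2 z) * Rabs (tan1 z) <= Rabs (q2 - gam2 z)) by nra.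
  lra.
Qed.

Lemma interior_offsets : open2 D ->
  exists sp, (sp = 1 \/ sp = -1) /\
    forall t e, Rabs (t - s) <= cp / 4 -> 0 < e < cp -> D (offset sp t e).
Proof.
  intros HDo.
  destruct (bdry_gam s) as [Hcl _].
  destruct (Hcl (cp / 32)) as [qq [HDq Hdq]]; [lra|].
  assert (Hq1 := Rabs_fst_le_dist2 (gam s) qq). assert (Hq2 := Rabs_snd_le_dist2 (gam s) qq).
  rewrite Rabs_minus_sym in Hq1, Hq2.
  destruct (offset_cover (fst qq) (snd qq)) as [t0 [e0 [Ht0 [He0 Eq]]]];
    [unfold gam1; lra | unfold gam2; lra |].
  rewrite <- surjective_pairing in Eq.
  assert (Ex : exists sp ee, (sp = 1 \/ sp = -1) /\ 0 < ee < cp /\ offset sp t0 ee = qq).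
  { destruct (Rtotal_order e0 0) as [Hn|[Hz|Hp]].
    - exists (-1), (- e0). rewrite Rabs_left in He0 by exact Hn.
      split; [now right | split; [lra|]]. rewrite Eq. unfold offset. f_equal; ring.
    - exfalso. apply (proj2 (bdry_gam t0)).
      replace (gam t0) with qq; [exact HDq|].
      rewrite Eq, Hz, (surjective_pairing (gam t0)). unfold gam1, gam2. f_equal; ring.
    - exists 1, e0. rewrite Rabs_right in He0 by lra.
      split; [now left | split; [lra|]]. rewrite Eq. unfold offset. f_equal; ring. }
  destruct Ex as [sp [ee [Hsp [Hee EP]]]].
  exists sp. split; [exact Hsp|]. intros t e Ht He.
  apply (offset_same_side D (Dex D) sp t0 ee t e (open2_open _ HDo) (open2_open _ (open2_Dex D))
           (Dex_not_D D) (D_or_Dex D) Hsp Ht0 Hee Ht He).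
  now rewrite EP.
Qed.

Lemma exterior_offsets : open2 D ->
  exists sg, (sg = 1 \/ sg = -1) /\
    (forall t, Rabs (t - s) < cp / 4 -> nv t = (sg * - tan2 t, sg * tan1 t)) /\
    (forall t e, Rabs (t - s) < cp / 4 -> 0 < e < cp -> Dex D (offset sg t e)).
Proof.
  intros HDo. destruct (interior_offsets HDo) as [sp [Hsp SideD]].
  destruct (outward_normal_sign s) as [sg [Hsg Ens]].
  destruct (outward_offset s sg cp cp_pos Ens) as [e1 [He1 Dx1]].
  assert (Hs0 : Rabs (s - s) <= cp / 4) by (rewrite Rminus_diag, Rabs_R0; lra).
  assert (SideX : forall t e, Rabs (t - s) <= cp / 4 -> 0 < e < cp -> Dex D (offset sg t e)).
  { intros t e Ht He.
    apply (offset_same_side (Dex D) D sg s e1 t e (open2_open _ (open2_Dex D)) (open2_open _ HDo)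
             (fun z A B => Dex_not_D D z B A)
             (fun z Hz => proj1 (or_comm _ _) (D_or_Dex D z Hz)) Hsg Hs0 He1 Ht He Dx1). }
  assert (Hne : sg <> sp).
  { intros E. rewrite E in Dx1. exact (Dex_not_D D _ (SideD s e1 Hs0 He1) Dx1). }
  exists sg. split; [exact Hsg | split].
  - intros t Ht. destruct (outward_normal_sign t) as [st [Hst Ent]].
    rewrite Ent. replace st with sg; [reflexivity|].
    destruct (Req_dec st sp) as [E|NE].
    + exfalso. destruct (outward_offset t st cp cp_pos Ent) as [e2 [He2 Dx2]].
      rewrite E in Dx2. exact (Dex_not_D D _ (SideD t e2 ltac:(lra) He2) Dx2).
    + destruct Hst as [-> | ->]; destruct Hsg as [-> | ->]; destruct Hsp as [-> | ->]; lra.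
  - intros t e Ht He. apply SideX; [lra | exact He].
Qed.

End NearParameter.

Lemma tangent_radius (s : R) : exists r1, 0 < r1 /\ r1 <= L / 4 /\
  (forall u, Rabs (u - s) < r1 -> Rabs (tan1 u - tan1 s) < 1 / 8) /\
  (forall u, Rabs (u - s) < r1 -> Rabs (tan2 u - tan2 s) < 1 / 8).
Proof.
  pose proof L_pos as HL. assert (H8 : 0 < 1 / 8) by lra.
  destruct (continuous_R_eps tan1 s (smooth_continuous _ s smooth_tan1) _ H8) as [d1 [Hd1 C1]].
  destruct (continuous_R_eps tan2 s (smooth_continuous _ s smooth_tan2) _ H8) as [d2 [Hd2 C2]].
  exists (Rmin (Rmin d1 d2) (L / 4)).
  pose proof (Rmin_l (Rmin d1 d2) (L / 4)). pose proof (Rmin_r (Rmin d1 d2) (L / 4)).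
  pose proof (Rmin_l d1 d2). pose proof (Rmin_r d1 d2).
  split; [repeat apply Rmin_pos; lra | split; [lra | split]].
  - intros u Hu. apply C1. lra.
  - intros u Hu. apply C2. lra.
Qed.

(* Away from [s] (within one period) the curve stays a positive distance away from
   [gam s], by compactness and injectivity on a period. *)
Lemma far_distance (s r1 : R) : 0 < r1 -> r1 <= L / 4 ->
  exists m, 0 < m /\ forall c, s + r1 / 2 <= c <= s + L - r1 / 2 ->
    m <= (gam1 c - gam1 s) ^ 2 + (gam2 c - gam2 s) ^ 2.
Proof.
  intros Hr1 Hr1L. pose proof L_pos as HL.
  set (q := fun c => (gam1 c - gam1 s) ^ 2 + (gam2 c - gam2 s) ^ 2).
  assert (Sq : smooth q).
  { apply smooth_plus; apply smooth_pow; apply smooth_minus;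
      auto using smooth_const, smooth_gam1, smooth_gam2. }
  destruct (continuity_ab_min q (s + r1 / 2) (s + L - r1 / 2)) as [mx [Hmx1 Hmx2]]; [lra| |].
  { intros c _. apply continuity_pt_filterlim. now apply smooth_continuous. }
  exists (q mx). split; [|exact Hmx1].
  destruct (Rle_lt_dec (q mx) 0) as [Hle|Hlt]; auto. exfalso.
  unfold q in Hle.
  pose proof (pow2_ge_0 (gam1 mx - gam1 s)). pose proof (pow2_ge_0 (gam2 mx - gam2 s)).
  assert (X1 : gam1 mx = gam1 s) by nra. assert (X2 : gam2 mx = gam2 s) by nra.
  assert (Eg : gam s = gam mx).
  { rewrite (surjective_pairing (gam s)), (surjective_pairing (gam mx)).
    unfold gam1, gam2 in X1, X2. now rewrite X1, X2. }
  destruct (gam_eq_period s mx Eg) as [n En].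
  assert (0 < IZR n * L < L) by lra.
  assert (A1 : (0 < n)%Z) by (apply lt_IZR; apply (Rmult_lt_reg_r L); lra).
  assert (A2 : (n < 1)%Z) by (apply lt_IZR; apply (Rmult_lt_reg_r L); lra).
  lia.
Qed.

Lemma normal_tube (s : R) : open2 D ->
  exists r eps sg, 0 < r /\ 0 < eps /\ (sg = 1 \/ sg = -1) /\
    (forall t, Rabs (t - s) < r -> nv t = (sg * - tan2 t, sg * tan1 t)) /\
    (forall t e, Rabs (t - s) < r -> 0 < e < eps -> Dex D (offset sg t e)).
Proof.
  intros HDo.
  destruct (tangent_radius s) as [r1 [Hr1 [Hr1L [Ht1 Ht2]]]].
  destruct (far_distance s r1 Hr1 Hr1L) as [m [Hm Hfar]].
  destruct (exterior_offsets s r1 Hr1 Ht1 Ht2 m Hm Hfar HDo) as [sg [Hsg [Hnv HDex]]].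
  set (cp := Rmin (Rmin 1 (m / 16)) (r1 / 2)).
  assert (Hcp : 0 < cp) by (unfold cp; repeat apply Rmin_pos; lra).
  exists (cp / 4), cp, sg. repeat split; auto; lra.
Qed.

End Boundary.

(** * The scattered field near the boundary *)

Lemma rlim0_eq (g : R -> C) (l : C) : filterlim g (at_right 0) (locally l) -> rlim0 g = l.
Proof.
  intros H. unfold rlim0.
  destruct (excluded_middle_informative _) as [Hex|Hn].
  - destruct (constructive_indefinite_description _ Hex) as [l' Hl']. simpl.
    apply (filterlim_locally_unique (V := C_R_NormedModule) (F := at_right 0) g); auto.
  - exfalso. apply Hn. now exists l.
Qed.

Lemma filterlim_at_right_slice (G : pt -> R) (s : R) : continuous G (s, 0) ->
  filterlim (fun e => G (s, e)) (at_right 0) (locally (G (s, 0))).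
Proof.
  intros Hc. apply (filterlim_filter_le_1 _ (filter_le_within (F := locally 0) (fun y => 0 < y))).
  apply (continuous_comp (fun e => (s, e)) G); [|exact Hc].
  apply filterlim_locally_pair; [typeclasses eauto | apply continuous_const | apply continuous_id].
Qed.

Section Assembly.
Variables (D : pt -> Prop) (L : R) (gam nv : R -> pt) (alpha k : R).
Hypothesis Harc : arclength_param D L gam.
Variables s r eps sg : R.
Hypotheses (Hr : 0 < r) (Heps : 0 < eps) (Hsg : sg = 1 \/ sg = -1).
Hypothesis Hnv : forall t, Rabs (t - s) < r -> nv t = (sg * - tan2 gam t, sg * tan1 gam t).
Hypothesis HDex : forall t e, Rabs (t - s) < r -> 0 < e < eps -> Dex D (offset gam sg t e).

Let g1 := gam1 gam.
Let g2 := gam2 gam.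
Let Hg1 : smooth g1 := smooth_gam1 D L gam Harc.
Let Hg2 : smooth g2 := smooth_gam2 D L gam Harc.

Lemma pmove_normal_map (t e : R) : Rabs (t - s) < r ->
  pmove (gam t) e (nv t) = normal_map g1 g2 sg t e.
Proof. intros Ht. unfold pmove. now rewrite (Hnv t Ht). Qed.

Lemma normal_map_0 (t : R) : normal_map g1 g2 sg t 0 = gam t.
Proof.
  unfold normal_map, curvilinear. rewrite !Rmult_0_l, !Rplus_0_r.
  symmetry. apply surjective_pairing.
Qed.

Lemma gam_in_closure_Dex (x : R) : Rabs (x - s) < r -> closure2 (Dex D) (gam x).
Proof.
  intros Hx e0 He0. set (eta := Rmin eps e0 / 4).
  pose proof (Rmin_l eps e0). pose proof (Rmin_r eps e0). pose proof (Rmin_pos eps e0 Heps He0).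
  exists (offset gam sg x eta). split; [apply HDex; unfold eta; auto; lra|].
  assert (Heta : 0 < eta < e0 / 2) by (unfold eta; lra).
  assert (Hsa := Rabs_sign sg Hsg).
  apply dist2_lt; unfold offset; cbn [fst snd]; fold (gam1 gam x) (gam2 gam x);
    [ replace (gam1 gam x + eta * (sg * - tan2 gam x) - gam1 gam x) with (eta * (sg * - tan2 gam x))
        by ring;
      pose proof (Rabs_tan2_le D L gam Harc x) as B; rewrite <- (Rabs_Ropp (tan2 gam x)) in B
    | replace (gam2 gam x + eta * (sg * tan1 gam x) - gam2 gam x) with (eta * (sg * tan1 gam x))
        by ring;
      pose proof (Rabs_tan1_le D L gam Harc x) as B ];
    rewrite !Rabs_mult, Hsa, (Rabs_right eta) by lra; nra.
Qed.

Lemma admissible_of_helmholtz (O : pt -> Prop) (f : pt -> R) :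
  open2 O -> (forall p, closure2 (Dex D) p -> O p) -> smooth_on O f ->
  (forall p, Dex D p -> alpha * lap f p + k ^ 2 * f p = 0) ->
  admissible g1 g2 sg alpha k s f.
Proof.
  intros HO HcO Hf Hp. exists O. split; [now apply open2_open | split; [exact Hf|]].
  apply (locally_R _ _ r Hr). intros x Hx. split.
  - change (O (normal_map g1 g2 sg x 0)). rewrite normal_map_0. now apply HcO, gam_in_closure_Dex.
  - exists eps. split; [exact Heps|]. intros y Hy. apply Hp. now apply HDex.
Qed.

Section RealComponent.
Variables (v : pt -> R) (O : pt -> Prop).
Hypotheses (HO : open2 O) (HcO : forall p, closure2 (Dex D) p -> O p) (Hv : smooth_on O v).

Lemma continuous_ipd_normal_pullback (w : list bool) :
  continuous (ipd w (normal_pullback g1 g2 sg v)) (s, 0).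
Proof.
  apply (smooth_on_normal_pullback g1 g2 Hg1 Hg2 sg O v (open2_open _ HO) Hv w (s, 0)).
  change (O (normal_map g1 g2 sg s 0)). rewrite normal_map_0.
  apply HcO, gam_in_closure_Dex. now rewrite Rminus_diag, Rabs_R0.
Qed.

Lemma filterlim_normal_derivative (N : nat) :
  filterlim (fun e => Derive_n (fun e' => v (pmove (gam s) e' (nv s))) N e) (at_right 0)
    (locally (trace_dn g1 g2 sg v N s)).
Proof.
  assert (Hs : Rabs (s - s) < r) by (now rewrite Rminus_diag, Rabs_R0).
  apply (filterlim_ext (fun e => ipd (repeat false N) (normal_pullback g1 g2 sg v) (s, e))).
  - intros e. rewrite <- (app_nil_r (repeat false N)), <- ipd_repeat_false.
    apply Derive_n_ext. intros y.
    simpl. unfold normal_pullback, pullback. cbn [fst snd]. now rewrite pmove_normal_map.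
  - apply filterlim_at_right_slice, continuous_ipd_normal_pullback.
Qed.

Lemma Derive_n_tangential_trace (j : nat) :
  Derive_n (fun t => v (gam t)) j s = Derive_n (trace_dn g1 g2 sg v 0) j s.
Proof.
  apply Derive_n_ext. intros x. unfold trace_dn, normal_pullback, pullback. simpl.
  fold (normal_map g1 g2 sg x 0). now rewrite normal_map_0.
Qed.

Lemma filterlim_tangential_normal_derivative (j : nat) :
  filterlim (fun e => Derive_n (fun t => Derive_n (fun e' => v (pmove (gam t) e' (nv t))) 1 e) j s)
    (at_right 0) (locally (Derive_n (trace_dn g1 g2 sg v 1) j s)).
Proof.
  apply (filterlim_ext (fun e =>
    ipd (repeat true j ++ false :: nil) (normal_pullback g1 g2 sg v) (s, e))).
  - intros e. rewrite <- ipd_repeat_true. apply Derive_n_ext_loc.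
    apply (locally_R _ _ r Hr). intros t Ht.
    change (false :: nil) with (repeat false 1 ++ nil). rewrite <- ipd_repeat_false.
    apply Derive_n_ext. intros y. simpl. unfold normal_pullback, pullback. cbn [fst snd].
    now rewrite pmove_normal_map.
  - rewrite Derive_n_trace_dn. apply filterlim_at_right_slice, continuous_ipd_normal_pullback.
Qed.

End RealComponent.

Lemma fst_sum_n (F : nat -> C) (N : nat) : fst (sum_n F N) = sum_n (fun j => fst (F j)) N.
Proof. induction N as [|N IH]; [now rewrite !sum_O | rewrite !sum_Sn, <- IH; reflexivity]. Qed.

Lemma snd_sum_n (F : nat -> C) (N : nat) : snd (sum_n F N) = sum_n (fun j => snd (F j)) N.
Proof. induction N as [|N IH]; [now rewrite !sum_O | rewrite !sum_Sn, <- IH; reflexivity]. Qed.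

Section ComplexField.
Variables (u : pt -> C) (O : pt -> Prop).
Hypotheses (HO : open2 O) (HcO : forall p, closure2 (Dex D) p -> O p)
  (Hu1 : smooth_on O (fun p => fst (u p))) (Hu2 : smooth_on O (fun p => snd (u p))).

Lemma dnN_traces (N : nat) : dnN gam nv u N s =
  (trace_dn g1 g2 sg (fun p => fst (u p)) N s, trace_dn g1 g2 sg (fun p => snd (u p)) N s).
Proof.
  apply rlim0_eq, filterlim_locally_pair; [typeclasses eauto | |];
    now apply filterlim_normal_derivative with O.
Qed.

Lemma dtau_traces (j : nat) : dtau gam u j s =
  (Derive_n (trace_dn g1 g2 sg (fun p => fst (u p)) 0) j s,
   Derive_n (trace_dn g1 g2 sg (fun p => snd (u p)) 0) j s).
Proof.
  unfold dtau, Cderive_n.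
  now rewrite (Derive_n_tangential_trace (fun p => fst (u p))),
              (Derive_n_tangential_trace (fun p => snd (u p))).
Qed.

Lemma dtau_dn_traces (j : nat) : dtau_dn gam nv u j s =
  (Derive_n (trace_dn g1 g2 sg (fun p => fst (u p)) 1) j s,
   Derive_n (trace_dn g1 g2 sg (fun p => snd (u p)) 1) j s).
Proof.
  apply rlim0_eq, filterlim_locally_pair; [typeclasses eauto | |];
    now apply filterlim_tangential_normal_derivative with O.
Qed.

End ComplexField.

Lemma normal_derivative_expansion (lam : R) (N : nat) : 0 < alpha ->
  exists A B : nat -> R, forall bc phi u,
    scattered_field D L gam nv alpha k lam bc phi u ->
    dnN gam nv u N s =
    Cplus (sum_n (fun j => Cmult (RtoC (A j)) (dtau gam u j s)) N)
          (sum_n (fun j => Cmult (RtoC (B j)) (dtau_dn gam nv u j s)) N).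
Proof.
  intros Halpha.
  destruct (representable_trace_dn g1 g2 Hg1 Hg2 (unit_tangent D L gam Harc) sg Hsg alpha k s
              N N ltac:(lra) (le_n N) 0) as [l [Hok HE]].
  exists (fun j => comb_coef l false j s), (fun j => comb_coef l true j s).
  intros bc phi u [_ [[O [HO [HcO [Hu1 Hu2]]]] [Hh _]]].
  assert (Hexp : forall v, smooth_on O v -> (forall p, Dex D p -> alpha * lap v p + k ^ 2 * v p = 0) ->
    trace_dn g1 g2 sg v N s = sum_n (fun j =>
      comb_coef l false j s * Derive_n (trace_dn g1 g2 sg v 0) j s
      + comb_coef l true j s * Derive_n (trace_dn g1 g2 sg v 1) j s) N).
  { intros v Hv Hpde. rewrite <- (eval_comb_sum_n g1 g2 sg v N l s Hok).
    exact (locally_singleton _ _ (HE v (admissible_of_helmholtz O v HO HcO Hv Hpde))). }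
  rewrite (dnN_traces u O HO HcO Hu1 Hu2).
  apply injective_projections; cbn [fst snd]; unfold Cplus; cbn [fst snd];
    rewrite ?fst_sum_n, ?snd_sum_n.
  - rewrite (Hexp _ Hu1 (fun p Hp => proj1 (Hh p Hp))), <- sum_n_Rplus.
    apply sum_n_ext. intros j. match goal with |- ?a = ?b => change (@eq R a b) end.
    rewrite dtau_traces, (dtau_dn_traces u O HO HcO Hu1 Hu2). unfold Cmult, RtoC. cbn [fst snd]. ring.
  - rewrite (Hexp _ Hu2 (fun p Hp => proj2 (Hh p Hp))), <- sum_n_Rplus.
    apply sum_n_ext. intros j. match goal with |- ?a = ?b => change (@eq R a b) end.
    rewrite dtau_traces, (dtau_dn_traces u O HO HcO Hu1 Hu2). unfold Cmult, RtoC. cbn [fst snd]. ring.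
Qed.

End Assembly.

Theorem theorem3p1 :
  forall (D : pt -> Prop) (L : R) (gam nv : R -> pt) (alpha k lam : R),
    open2 D -> bounded2 D -> simply_connected2 D ->
    arclength_param D L gam -> outward_normal D gam nv ->
    0 < alpha -> 0 < k ->
    exists a b : nat -> nat -> R -> C,
      forall (bc : bc_kind) (phi : incident) (u : pt -> C),
        scattered_field D L gam nv alpha k lam bc phi u ->
        forall (N : nat) (s : R), 0 <= s <= L ->
          dnN gam nv u N s =
          Cplus (sum_n (fun j => Cmult (a N j s) (dtau gam u j s)) N)
                (sum_n (fun j => Cmult (b N j s) (dtau_dn gam nv u j s)) N).
Proof.
  intros D L gam nv alpha k lam HDo _ _ Harc Hout Halpha _.
  assert (Hlocal : forall Ns : nat * R, exists AB : (nat -> R) * (nat -> R),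
    forall bc phi u, scattered_field D L gam nv alpha k lam bc phi u ->
      dnN gam nv u (fst Ns) (snd Ns) =
      Cplus (sum_n (fun j => Cmult (RtoC (fst AB j)) (dtau gam u j (snd Ns))) (fst Ns))
            (sum_n (fun j => Cmult (RtoC (snd AB j)) (dtau_dn gam nv u j (snd Ns))) (fst Ns))).
  { intros [N s].
    destruct (normal_tube D L gam nv Harc Hout s HDo) as [r [eps [sg [Hr [Heps [Hsg [Hnv HDex]]]]]]].
    destruct (normal_derivative_expansion D L gam nv alpha k Harc s r eps sg Hr Heps Hsg Hnv HDex
                lam N Halpha) as [A [B HAB]].
    now exists (A, B). }
  destruct (choice _ Hlocal) as [F HF].
  exists (fun N j s => RtoC (fst (F (N, s)) j)), (fun N j s => RtoC (snd (F (N, s)) j)).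
  intros bc phi u Hsc N s _. exact (HF (N, s) bc phi u Hsc).
Qed.
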